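(* Under the standing assumptions below, for every $\lambda\in(1-\delta,1+\delta)$ the map $s\mapsto F_{2n}(s,\lambda)$ is affine and orientation-preserving, and it depends analytically on $\lambda$. Moreover, $F_{2n}(\cdot,\lambda)$ is expanding (its slope is $>1$) if and only if $\lambda<1$, and contracting (slope $<1$) if and only if $\lambda>1$.
   Context: Let $P$ be a simply connected polygon with $d$ sides labeled $1,\dots,d$, $\partial P$ oriented anticlockwise, and let $\Phi$ be its billiard map, written in coordinates $(s,\theta)$ ($s$ the arc-length parameter on $\partial P$, $\theta\in(-\pi/2,\pi/2)$ the oriented angle from the inward normal). $\Sigma_{i,j}$ is the set of phase points on side $i$ whose next collision is on side $j$; $\beta_{i,j}$ is $\pi$ minus the angle formed by the oriented sides $i$ and $j$, so that the angle after a collision from side $i$ to side $j$ is $\beta_{i,j}-\theta$. For $\lambda>0$, $R_\lambda(s,\theta)=(s,\lambda\theta)$ and $\Phi_\lambda=R_\lambda\circ\Phi$. Let $\ell_i$ be the line supporting side $i$ and $x_i$ its arc-length parametrization extending that of side $i$. For distinct sides $i,j$, $\Phi_{i,j}(s,\theta):=(s',\beta_{i,j}-\theta)$, where $x_j(s')$ is the intersection with $\ell_j$ of the line through $x_i(s)$ whose direction makes the angle $\theta$ with the inward normal of side $i$; it is defined for all $s\in\mathbb{R}$ whenever $|\beta_{i,j}-\theta|<\pi/2$, agrees with $\Phi$ on $\Sigma_{i,j}$, and its first component is affine in $s$. Standing assumptions: $\mathcal{C}$ is a periodic cylinder of $\Phi$ (a maximal family of parallel periodic orbits with a common itinerary)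 of even period $2n>2$ with itinerary $i_0,\dots,i_{2n-1}$ (indices mod $2n$) and angles $\hat\theta_0,\dots,\hat\theta_{2n-1}$ at the successive collisions, and $\hat\theta_0=\frac{1}{2n}\sum_{k=0}^{2n-1}(-1)^{k+1}k\beta_{i_k,i_{k+1}}$. Define $\theta_0(\lambda):=\frac{1}{\lambda^{2n}-1}\sum_{k=0}^{2n-1}(-\lambda)^{2n-k}\beta_{i_k,i_{k+1}}$ (extended analytically to $\lambda=1$, where it equals $\hat\theta_0$) and $\theta_k(\lambda):=\lambda(\beta_{i_{k-1},i_k}-\theta_{k-1}(\lambda))$ for $k=1,\dots,2n$; then $\theta_k(1)=\hat\theta_k$ and $\theta_{2n}=\theta_0$. Fix $\delta>0$ such that all $\theta_k(\lambda)\in(-\pi/2,\pi/2)$ for $\lambda\in(1-\delta,1+\delta)$. For $k=1,\dots,2n$ define $F_k(s,\lambda):=\pi_1\circ R_\lambda\circ\Phi_{i_{k-1},i_k}\circ\cdots\circ R_\lambda\circ\Phi_{i_0,i_1}(s,\theta_0(\lambda))$ for $s\in\mathbb{R}$, $\lambda\in(1-\delta,1+\delta)$, where $\pi_1(s,\theta)=s$. *)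

From Stdlib Require Import Reals Lra.
Open Scope R_scope.

Definition pt := (R * R)%type.
Definition padd (p q : pt) : pt := (fst p + fst q, snd p + snd q).
Definition psub (p q : pt) : pt := (fst p - fst q, snd p - snd q).
Definition pscale (a : R) (p : pt) : pt := (a * fst p, a * snd p).
Definition dot (p q : pt) : R := fst p * fst q + snd p * snd q.
Definition cross (p q : pt) : R := fst p * snd q - snd p * fst q.
Definition pnorm (p : pt) : R := sqrt (dot p p).
Definition rotate (a : R) (p : pt) : pt :=
  (cos a * fst p - sin a * snd p, sin a * fst p + cos a * snd p).

(* oriented angle from u to v (unit vectors), taken in [0, 2 PI) *)
Definition oriented_angle (u v : pt) : R :=
  if Rle_dec 0 (cross u v) then acos (dot u v) else 2 * PI - acos (dot u v).

Fixpoint rsum (f : nat -> R) (m : nat) : R :=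
  match m with O => 0 | S m' => rsum f m' + f m' end.

(* ---------- the polygon ----------
   d sides labelled 0..d-1 (the paper's 1..d); side i goes from vertex
   vtx i to vertex vtx (i+1), indices mod d; boundary oriented anticlockwise. *)
Section Polygon.
Variables (d : nat) (V : nat -> pt).

Definition vtx (i : nat) : pt := V (i mod d).
Definition sdir (i : nat) : pt := psub (vtx (S i)) (vtx i).
Definition slen (i : nat) : R := pnorm (sdir i).
Definition tang (i : nat) : pt := pscale (/ slen i) (sdir i).
(* inward unit normal: left normal, since the boundary is anticlockwise *)
Definition inn (i : nat) : pt := rotate (PI / 2) (tang i).

Fixpoint arc (i : nat) : R :=
  match i with O => 0 | S i' => arc i' + slen i' end.

(* x_i : arc-length parametrisation of the line l_i supporting side i *)
Definition xline (i : nat) (s : R) : pt := padd (vtx i) (pscale (s - arc i) (tang i)).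

Definition on_side_int (s : R) (i : nat) : Prop :=
  (i < d)%nat /\ arc i < s < arc (S i).

Definition seg_pt (i : nat) (t : R) : pt := padd (vtx i) (pscale t (sdir i)).

Definition on_boundary (q : pt) : Prop :=
  exists i t, (i < d)%nat /\ 0 <= t <= 1 /\ q = seg_pt i t.

(* simple (simply connected) polygon with d genuine sides, anticlockwise *)
Definition simple_polygon : Prop :=
  (3 <= d)%nat /\
  (forall i, (i < d)%nat -> vtx i <> vtx (S i)) /\
  (forall i, (i < d)%nat -> cross (sdir i) (sdir (S i)) <> 0) /\
  (forall i j t t', (i < d)%nat -> (j < d)%nat -> i <> j ->
      0 <= t <= 1 -> 0 <= t' <= 1 -> seg_pt i t = seg_pt j t' ->
      (S i mod d = j /\ t = 1 /\ t' = 0) \/ (S j mod d = i /\ t = 0 /\ t' = 1)) /\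
  0 < rsum (fun i => cross (vtx i) (vtx (S i))) d.

Definition dirv (i : nat) (theta : R) : pt := rotate theta (inn i).

Definition reflect (j : nat) (u : pt) : pt :=
  psub u (pscale (2 * dot u (inn j)) (inn j)).

(* Phi p q :  Phi(p) = q, for the billiard map Phi in coordinates (s, theta) *)
Definition Phi (p q : pt) : Prop :=
  let (s, th) := p in let (s', th') := q in
  exists i j, on_side_int s i /\ on_side_int s' j /\
    - (PI / 2) < th < PI / 2 /\ - (PI / 2) < th' < PI / 2 /\
    exists t, 0 < t /\
      padd (xline i s) (pscale t (dirv i th)) = xline j s' /\
      (forall t', 0 < t' < t -> ~ on_boundary (padd (xline i s) (pscale t' (dirv i th)))) /\
      dirv j th' = reflect j (dirv i th).

Definition beta (i j : nat) : R := PI - oriented_angle (tang j) (tang i).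

(* first component of Phi_{i,j}: parameter s' of the intersection x_j(s') of l_j with
   the line through x_i(s) of direction dirv i theta *)
Definition Phiij_s (i j : nat) (s theta : R) : R :=
  let u := dirv i theta in
  arc j + cross (psub (xline i s) (vtx j)) u / cross (tang j) u.

Variables (n : nat) (itin : nat -> nat) (thh : nat -> R).
Definition it (k : nat) : nat := itin (k mod (2 * n)).

Definition cyl_orbit (p : pt) : Prop :=
  exists q : nat -> pt, q O = p /\ q (2 * n)%nat = p /\
    (forall k, (k < 2 * n)%nat -> Phi (q k) (q (S k))) /\
    (forall k, (0 < k < 2 * n)%nat -> q k <> p) /\
    (forall k, (k < 2 * n)%nat -> on_side_int (fst (q k)) (itin k) /\ snd (q k) = thh k).

Definition periodic_cylinder (C : pt -> Prop) : Prop :=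
  (exists p, C p) /\ (forall p, C p <-> cyl_orbit p).

Definition betak (k : nat) : R := beta (it k) (it (S k)).

Definition theta_hat0_formula : R :=
  / INR (2 * n) * rsum (fun k => (-1) ^ (S k) * INR k * betak k) (2 * n).

(* theta_0(lambda), with its analytic extension at lambda = 1 *)
Definition theta0 (lam : R) : R :=
  if Req_dec_T lam 1 then theta_hat0_formula
  else / (lam ^ (2 * n) - 1) * rsum (fun k => (- lam) ^ (2 * n - k) * betak k) (2 * n).

Fixpoint thetak (lam : R) (k : nat) : R :=
  match k with
  | O => theta0 lam
  | S k' => lam * (betak k' - thetak lam k')
  end.

(* (R_lam o Phi_{i_{k-1},i_k} o ... o R_lam o Phi_{i_0,i_1}) (s, theta_0(lam)) *)
Fixpoint Fstate (k : nat) (s lam : R) : pt :=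
  match k with
  | O => (s, theta0 lam)
  | S k' => let p := Fstate k' s lam in
      (Phiij_s (it k') (it (S k')) (fst p) (snd p), lam * (betak k' - snd p))
  end.

Definition F (k : nat) (s lam : R) : R := fst (Fstate k s lam).

End Polygon.

Definition analytic_on (f : R -> R) (a b : R) : Prop :=
  forall x0, a < x0 < b -> exists r, 0 < r /\ exists c : nat -> R,
    forall x, Rabs (x - x0) < r ->
      Un_cv (fun N => sum_f_R0 (fun m => c m * (x - x0) ^ m) N) (f x).

(* Each [Phi_{i,j}] is affine in [s] with slope [cos theta / - cos (beta_{i,j} - theta)], so
   [F_2n(., lambda)] is affine and its slope is the product of these factors along the orbit.
   Since [theta_{k+1} = lambda u_k] with [u_k = beta_k - theta_k], and [theta_2n = theta_0], the
   numerators telescope and the slope is [prod_k cos (lambda u_k) / cos u_k]: every factor is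
   [>= 1] when [lambda < 1] and [<= 1] when [lambda > 1], strictly as soon as [u_k <> 0]. If all
   [u_k] vanished, every [beta_k] would too, and the orbit would bounce perpendicularly between two
   antiparallel sides, closing up after two collisions instead of [2n > 2].
   Both [theta_2n = theta_0] and the analyticity of [theta_0] at [lambda = 1] rest on the
   vanishing of [sum_k (-1)^k beta_k], which is forced by the boundedness of [theta_0] near
   [lambda = 1]; then [theta_0] is a rational function without poles on [lambda > 0], and the
   analyticity of [A] and [B] follows from the stability of real-analytic functions under
   arithmetic, division and [cos], [sin], proved through composition of power series. *)

From Pilot Require Import Defs.
From Coquelicot Require Import Coquelicot.
From Stdlib Require Import Reals Lra Lia Classical.
Open Scope R_scope.

Lemma rsum_ext_lt (f g : nat -> R) (N : nat) :
  (forall m, (m < N)%nat -> f m = g m) -> rsum f N = rsum g N.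
Proof. induction N as [|N IH]; intros H; simpl; auto; rewrite IH, H; auto. Qed.

Lemma rsum_plus (f g : nat -> R) (N : nat) : rsum (fun m => f m + g m) N = rsum f N + rsum g N.
Proof. induction N as [|N IH]; simpl; [ring | rewrite IH; ring]. Qed.

Lemma rsum_scal (c : R) (f : nat -> R) (N : nat) : rsum (fun m => c * f m) N = c * rsum f N.
Proof. induction N as [|N IH]; simpl; [ring | rewrite IH; ring]. Qed.

Lemma rsum_eq0 (f : nat -> R) (N : nat) : (forall m, (m < N)%nat -> f m = 0) -> rsum f N = 0.
Proof. induction N as [|N IH]; intros H; simpl; auto; rewrite IH, H; auto; ring. Qed.

Lemma rsum_le (f g : nat -> R) (N : nat) : (forall m, f m <= g m) -> rsum f N <= rsum g N.
Proof. intros H; induction N as [|N IH]; simpl; [lra | specialize (H N); lra]. Qed.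

Lemma rsum_ge0 (f : nat -> R) (N : nat) : (forall m, 0 <= f m) -> 0 <= rsum f N.
Proof. intros H; rewrite <- (rsum_eq0 (fun _ => 0) N) by auto; apply rsum_le, H. Qed.

Lemma rsum_abs (f : nat -> R) (N : nat) : Rabs (rsum f N) <= rsum (fun m => Rabs (f m)) N.
Proof.
  induction N as [|N IH]; simpl; [rewrite Rabs_R0; lra|].
  eapply Rle_trans; [apply Rabs_triang | lra].
Qed.

Lemma rsum_S_sum_f_R0 (f : nat -> R) (N : nat) : rsum f (S N) = sum_f_R0 f N.
Proof. induction N as [|N IH]; [simpl; ring | simpl in *; rewrite IH; ring]. Qed.

Fixpoint rprod (f : nat -> R) (m : nat) : R :=
  match m with O => 1 | S m' => rprod f m' * f m' end.

Lemma rprod_ext_lt (f g : nat -> R) (m : nat) :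
  (forall i, (i < m)%nat -> f i = g i) -> rprod f m = rprod g m.
Proof. induction m as [|m IH]; intros H; simpl; auto; rewrite IH, H; auto. Qed.

Lemma rprod_gt0 (f : nat -> R) (m : nat) : (forall i, (i < m)%nat -> 0 < f i) -> 0 < rprod f m.
Proof. induction m as [|m IH]; intros H; simpl; [lra | apply Rmult_lt_0_compat; auto]. Qed.

Lemma rprod_le (f g : nat -> R) (m : nat) :
  (forall i, (i < m)%nat -> 0 < f i <= g i) -> rprod f m <= rprod g m.
Proof.
  induction m as [|m IH]; intros H; simpl; [lra|].
  assert (0 < rprod f m) by (apply rprod_gt0; intros; apply H; lia).
  assert (rprod f m <= rprod g m) by auto.
  assert (0 < f m <= g m) by auto; nra.
Qed.

Lemma rprod_lt (f g : nat -> R) (m i0 : nat) :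
  (forall i, (i < m)%nat -> 0 < f i <= g i) -> (i0 < m)%nat -> f i0 < g i0 ->
  rprod f m < rprod g m.
Proof.
  induction m as [|m IH]; intros H Hi0 Hlt; [lia|]; simpl.
  assert (0 < rprod f m) by (apply rprod_gt0; intros; apply H; lia).
  assert (rprod f m <= rprod g m) by (apply rprod_le; auto).
  assert (0 < f m <= g m) by auto.
  destruct (Nat.eq_dec i0 m) as [->|Hne]; [nra|].
  assert (rprod f m < rprod g m) by (apply IH; auto; lia); nra.
Qed.

Lemma rprod_opp_den (f g : nat -> R) (m : nat) :
  rprod (fun i => f i / - g i) m = (-1) ^ m * rprod (fun i => f i / g i) m.
Proof. induction m as [|m IH]; simpl; [ring | rewrite IH; unfold Rdiv; rewrite Rinv_opp; ring]. Qed.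

Lemma rprod_div (f g : nat -> R) (m : nat) :
  (forall i, (i < m)%nat -> 0 < g i) -> rprod (fun i => f i / g i) m = rprod f m / rprod g m.
Proof.
  induction m as [|m IH]; intros H; simpl; [field|].
  assert (0 < rprod g m) by (apply rprod_gt0; auto).
  assert (0 < g m) by auto.
  rewrite IH by auto; field; lra.
Qed.

Lemma rprod_shift (f : nat -> R) (m : nat) : rprod (fun i => f (S i)) m * f O = rprod f m * f m.
Proof.
  induction m as [|m IH]; simpl; [ring|].
  replace (rprod (fun i => f (S i)) m * f (S m) * f O)
    with (rprod (fun i => f (S i)) m * f O * f (S m)) by ring.
  rewrite IH; ring.
Qed.

Lemma is_series_R0 : is_series (fun _ => 0) 0.
Proof.
  apply is_series_Reals; intros e He; exists 0%nat; intros N _.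
  rewrite sum_cte, Rmult_0_l; unfold Rdist; rewrite Rminus_0_r, Rabs_R0; lra.
Qed.

Lemma is_series_abs_le (v w : nat -> R) (lv lw : R) :
  is_series v lv -> is_series w lw -> (forall n, Rabs (v n) <= w n) -> Rabs lv <= lw.
Proof.
  intros Hv Hw Hvw; apply is_series_Reals in Hv, Hw.
  apply (Rle_cv_lim (Un := fun N => Rabs (sum_f_R0 v N)) (Vn := fun N => sum_f_R0 w N));
    auto using cv_cvabs.
  intro N; eapply Rle_trans; [apply sum_f_R0_triangle | apply sum_Rle; auto].
Qed.

Lemma is_series_le (a b : nat -> R) (la lb : R) :
  is_series a la -> is_series b lb -> (forall n, a n <= b n) -> la <= lb.
Proof.
  intros Ha Hb Hab; apply is_series_Reals in Ha, Hb.
  exact (Rle_cv_lim (fun N => sum_Rle _ _ N (fun n _ => Hab n)) Ha Hb).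
Qed.

Lemma ex_series_le_Rabs (a b : nat -> R) :
  (forall n, Rabs (a n) <= b n) -> ex_series b -> ex_series a.
Proof. intros Hab; apply (ex_series_le a b); exact Hab. Qed.

Section NonnegativeSeries.
Variables (a : nat -> R) (l : R).
Hypotheses (a_ge0 : forall n, 0 <= a n) (Hal : is_series a l).

Lemma is_series_partial_le (N : nat) : sum_f_R0 a N <= l.
Proof.
  apply is_series_Reals in Hal; apply growing_ineq; auto.
  intro m; simpl; specialize (a_ge0 (S m)); lra.
Qed.

Lemma is_series_term_le (N : nat) : a N <= l.
Proof.
  eapply Rle_trans; [|apply (is_series_partial_le N)].
  destruct N as [|N]; simpl; [lra|].
  assert (0 <= sum_f_R0 a N) by (apply cond_pos_sum; auto); lra.
Qed.

Lemma is_series_ge0 : 0 <= l.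
Proof. eapply Rle_trans; [apply a_ge0 | apply (is_series_term_le 0)]. Qed.

End NonnegativeSeries.

Lemma is_series_trunc (u : nat -> R) (N : nat) :
  is_series (fun j => if Compare_dec.le_dec j N then u j else 0) (sum_f_R0 u N).
Proof.
  assert (Htail : forall m, (N <= m)%nat ->
            sum_f_R0 (fun j => if Compare_dec.le_dec j N then u j else 0) m = sum_f_R0 u N).
  { intros m Hm; induction Hm; simpl.
    - apply sum_eq; intros i Hi; destruct (Compare_dec.le_dec i N); [reflexivity | lia].
    - rewrite IHHm; destruct (Compare_dec.le_dec (S m) N); [lia | ring]. }
  apply is_series_Reals; intros e He; exists N; intros m Hm.
  unfold Rdist; rewrite Htail, Rminus_diag, Rabs_R0 by lia; lra.
Qed.

Lemma is_series_PS_mult (a b : nat -> R) (y la lb : R) :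
  ex_series (fun n => Rabs (a n * y ^ n)) -> ex_series (fun n => Rabs (b n * y ^ n)) ->
  is_series (fun n => a n * y ^ n) la -> is_series (fun n => b n * y ^ n) lb ->
  is_series (fun n => PS_mult a b n * y ^ n) (la * lb).
Proof.
  intros Ea Eb Ha Hb; eapply is_series_ext; [|exact (is_series_mult _ _ la lb Ha Hb Ea Eb)].
  intro n; unfold PS_mult; rewrite Rmult_comm, scal_sum; apply sum_eq; intros i Hi.
  replace (y ^ n) with (y ^ i * y ^ (n - i)) by (rewrite <- pow_add; f_equal; lia); ring.
Qed.

Lemma ex_series_abs_PS_mult (a b : nat -> R) (y : R) :
  ex_series (fun n => Rabs (a n * y ^ n)) -> ex_series (fun n => Rabs (b n * y ^ n)) ->
  ex_series (fun n => Rabs (PS_mult a b n * y ^ n)).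
Proof.
  assert (Habs : forall c, ex_series (fun n => Rabs (c n * y ^ n)) ->
            is_series (fun n => Rabs (c n) * Rabs y ^ n) (Series (fun n => Rabs (c n * y ^ n))) /\
            ex_series (fun n => Rabs (Rabs (c n) * Rabs y ^ n))).
  { intros c Ec; split.
    - eapply is_series_ext; [|apply Series_correct, Ec].
      intro n; cbv beta; rewrite Rabs_mult, RPow_abs; reflexivity.
    - eapply ex_series_ext; [|exact Ec].
      intro n; cbv beta; rewrite !Rabs_mult, <- !RPow_abs, !Rabs_Rabsolu; reflexivity. }
  intros Ea Eb; destruct (Habs a Ea) as [Ha Ea'], (Habs b Eb) as [Hb Eb'].
  eapply ex_series_le_Rabs; [|eexists; exact (is_series_PS_mult _ _ _ _ _ Ea' Eb' Ha Hb)].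
  intro n; rewrite Rabs_Rabsolu, Rabs_mult, <- RPow_abs.
  apply Rmult_le_compat_r; [apply pow_le, Rabs_pos|].
  unfold PS_mult; eapply Rle_trans; [apply sum_f_R0_triangle|].
  apply sum_Rle; intros; rewrite Rabs_mult; lra.
Qed.

Lemma is_series_pow0 (c : nat -> R) (l : R) : is_series (fun n => c n * 0 ^ n) l -> l = c O.
Proof.
  intros H; apply is_series_unique in H; rewrite <- H; apply is_series_unique.
  replace (c O) with (sum_f_R0 (fun n => c n * 0 ^ n) 0) by (simpl; ring).
  eapply is_series_ext; [|apply (is_series_trunc (fun n => c n * 0 ^ n) 0)].
  intros [|j]; simpl; [ring|]; destruct (Compare_dec.le_dec (S j) 0); [lia | ring].
Qed.

Lemma Un_cv_close (u v : nat -> R) (l C : R) :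
  Un_cv u l -> (forall N, Rabs (u N - v N) <= (/ 2) ^ N * C) -> Un_cv v l.
Proof.
  intros Hu Huv eps Heps.
  destruct (Hu (eps / 2)) as [N1 HN1]; [lra|].
  assert (HC : 0 < Rabs C + 1) by (pose proof (Rabs_pos C); lra).
  destruct (pow_lt_1_zero (/ 2) ltac:(rewrite Rabs_pos_eq; lra) (eps / 2 / (Rabs C + 1)))
    as [N2 HN2]; [apply Rdiv_lt_0_compat; lra|].
  exists (max N1 N2); intros N HN; unfold Rdist in *.
  specialize (HN1 N ltac:(lia)); specialize (HN2 N ltac:(lia)); specialize (Huv N).
  rewrite Rabs_pos_eq in HN2 by (apply pow_le; lra).
  assert (Hq : 0 <= (/ 2) ^ N) by (apply pow_le; lra).
  assert ((/ 2) ^ N * C <= (/ 2) ^ N * (Rabs C + 1)) by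
    (apply Rmult_le_compat_l; [auto | pose proof (Rle_abs C); lra]).
  assert ((/ 2) ^ N * (Rabs C + 1) < eps / 2).
  { apply (Rmult_lt_compat_r (Rabs C + 1)) in HN2; [|lra].
    unfold Rdiv in HN2; rewrite Rmult_assoc, Rinv_l in HN2; lra. }
  replace (v N - l) with ((u N - l) - (u N - v N)) by ring.
  eapply Rle_lt_trans; [apply Rabs_triang|]; rewrite Rabs_Ropp; lra.
Qed.

(** * Real-analytic functions *)

Definition pseries_on (f : R -> R) (x0 : R) (c : nat -> R) (r : R) : Prop :=
  ex_series (fun n => Rabs (c n) * r ^ n) /\
  forall y, Rabs y <= r -> is_series (fun n => c n * y ^ n) (f (x0 + y)).

Definition analytic_at (f : R -> R) (x0 : R) : Prop :=
  exists (c : nat -> R) (r : R), 0 < r /\ pseries_on f x0 c r.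

Lemma abs_coef_pow_ge0 (c : nat -> R) (r : R) (n : nat) : 0 <= r -> 0 <= Rabs (c n) * r ^ n.
Proof. intros Hr; apply Rmult_le_pos; [apply Rabs_pos | apply pow_le, Hr]. Qed.

Lemma abs_term_le (c : nat -> R) (r y : R) (n : nat) :
  Rabs y <= r -> Rabs (c n * y ^ n) <= Rabs (c n) * r ^ n.
Proof.
  intros Hy; rewrite Rabs_mult, <- RPow_abs.
  apply Rmult_le_compat_l, pow_incr; auto using Rabs_pos.
Qed.

Lemma ex_series_abs_term (c : nat -> R) (r y : R) :
  ex_series (fun n => Rabs (c n) * r ^ n) -> Rabs y <= r -> ex_series (fun n => Rabs (c n * y ^ n)).
Proof.
  intros E Hy; apply (ex_series_le_Rabs _ (fun n => Rabs (c n) * r ^ n)); [|exact E].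
  intro n; rewrite Rabs_Rabsolu; apply abs_term_le, Hy.
Qed.

Lemma ex_series_abs_radius_le (c : nat -> R) (r r' : R) :
  ex_series (fun n => Rabs (c n) * r ^ n) -> 0 <= r' <= r -> ex_series (fun n => Rabs (c n) * r' ^ n).
Proof.
  intros E Hr'; apply (ex_series_le_Rabs _ (fun n => Rabs (c n) * r ^ n)); [|exact E].
  intro n; rewrite Rabs_pos_eq by (apply abs_coef_pow_ge0; lra).
  apply Rmult_le_compat_l; [apply Rabs_pos | apply pow_incr; lra].
Qed.

Lemma pseries_on_radius_le (f : R -> R) (x0 : R) (c : nat -> R) (r r' : R) :
  0 <= r' <= r -> pseries_on f x0 c r -> pseries_on f x0 c r'.
Proof.
  intros Hr' [E H]; split; [apply (ex_series_abs_radius_le c r); auto|].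
  intros y Hy; apply H; lra.
Qed.

Lemma analytic_at_ext_near (f g : R -> R) (x0 e : R) :
  0 < e -> (forall x, Rabs (x - x0) < e -> f x = g x) -> analytic_at f x0 -> analytic_at g x0.
Proof.
  intros He Hfg [c [r [Hr Hc]]]; exists c, (Rmin r (e / 2)).
  assert (Hmin : 0 < Rmin r (e / 2)) by (apply Rmin_glb_lt; lra).
  assert (Hle := Rmin_l r (e / 2)); assert (Hle' := Rmin_r r (e / 2)).
  destruct (pseries_on_radius_le f x0 c r (Rmin r (e / 2))) as [E H]; auto; [lra|].
  split; [lra | split; [exact E|]].
  intros y Hy; rewrite <- Hfg; [apply H; lra|].
  replace (x0 + y - x0) with y by ring; lra.
Qed.

Lemma analytic_at_ext (f g : R -> R) (x0 : R) :
  (forall x, f x = g x) -> analytic_at f x0 -> analytic_at g x0.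
Proof. intros Hfg; apply (analytic_at_ext_near f g x0 1); auto; lra. Qed.

Definition affine_coef (u v : R) (n : nat) : R :=
  match n with O => u | 1%nat => v | _ => 0 end.

Lemma is_series_affine_coef (u v y : R) : is_series (fun n => affine_coef u v n * y ^ n) (u + v * y).
Proof.
  replace (u + v * y) with (sum_f_R0 (fun n => affine_coef u v n * y ^ n) 1) by (simpl; ring).
  eapply is_series_ext; [|apply is_series_trunc].
  intros [|[|j]]; simpl; auto; destruct (Compare_dec.le_dec (S (S j)) 1); [lia | ring].
Qed.

Lemma ex_series_affine_coef (u v r : R) : ex_series (fun n => Rabs (affine_coef u v n) * r ^ n).
Proof.
  eexists; eapply is_series_ext; [|apply (is_series_affine_coef (Rabs u) (Rabs v * r) 1)].
  intros [|[|j]]; simpl; try ring; rewrite Rabs_R0; ring.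
Qed.

Lemma analytic_at_affine (u v x0 : R) : analytic_at (fun x => u + v * (x - x0)) x0.
Proof.
  exists (affine_coef u v), 1; split; [lra | split; [apply ex_series_affine_coef|]].
  intros y _; replace (x0 + y - x0) with y by ring; apply is_series_affine_coef.
Qed.

Lemma analytic_at_const (k x0 : R) : analytic_at (fun _ => k) x0.
Proof.
  apply (analytic_at_ext (fun x => k + 0 * (x - x0))); [intro; ring | apply analytic_at_affine].
Qed.

Lemma analytic_at_id (x0 : R) : analytic_at (fun x => x) x0.
Proof.
  apply (analytic_at_ext (fun x => x0 + 1 * (x - x0))); [intro; ring | apply analytic_at_affine].
Qed.

Section AnalyticOperations.
Variables (f g : R -> R) (x0 : R).
Hypotheses (Hf : analytic_at f x0) (Hg : analytic_at g x0).

Lemma analytic_at_common_radius :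
  exists a b r, 0 < r /\ pseries_on f x0 a r /\ pseries_on g x0 b r.
Proof.
  destruct Hf as [a [ra [Hra Ha]]], Hg as [b [rb [Hrb Hb]]].
  exists a, b, (Rmin ra rb); assert (0 < Rmin ra rb) by (apply Rmin_glb_lt; auto).
  split; [|split]; auto.
  - apply (pseries_on_radius_le f x0 a ra); auto; split; [lra | apply Rmin_l].
  - apply (pseries_on_radius_le g x0 b rb); auto; split; [lra | apply Rmin_r].
Qed.

Lemma analytic_at_plus : analytic_at (fun x => f x + g x) x0.
Proof.
  destruct analytic_at_common_radius as [a [b [r [Hr [[Ea Ha] [Eb Hb]]]]]].
  exists (fun n => a n + b n), r; split; [auto | split].
  - destruct Ea as [la Hla], Eb as [lb Hlb].
    apply (ex_series_le_Rabs _ (fun n => Rabs (a n) * r ^ n + Rabs (b n) * r ^ n)).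
    + intro n; assert (0 <= r ^ n) by (apply pow_le; lra).
      rewrite Rabs_pos_eq, <- Rmult_plus_distr_r.
      * apply Rmult_le_compat_r; [auto | apply Rabs_triang].
      * apply Rmult_le_pos; [apply Rabs_pos | auto].
    + eexists; apply (is_series_plus _ _ la lb); auto.
  - intros y Hy; apply (is_series_ext (fun n => a n * y ^ n + b n * y ^ n)).
    { intro n; symmetry; apply Rmult_plus_distr_r. }
    apply (is_series_plus _ _ _ _ (Ha y Hy) (Hb y Hy)).
Qed.

Lemma analytic_at_mult : analytic_at (fun x => f x * g x) x0.
Proof.
  destruct analytic_at_common_radius as [a [b [r [Hr [[Ea Ha] [Eb Hb]]]]]].
  assert (Hr_abs : Rabs r <= r) by (rewrite Rabs_pos_eq; lra).
  exists (PS_mult a b), r; split; [auto | split].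
  - apply (ex_series_le_Rabs _ (fun n => Rabs (PS_mult a b n * r ^ n))).
    + intro n; rewrite !Rabs_mult, Rabs_Rabsolu, (Rabs_pos_eq (r ^ n)) by (apply pow_le; lra); lra.
    + apply ex_series_abs_PS_mult; apply (ex_series_abs_term _ r); auto.
  - intros y Hy; apply is_series_PS_mult; auto; apply (ex_series_abs_term _ r); auto.
Qed.

End AnalyticOperations.

Lemma analytic_at_opp (f : R -> R) (x0 : R) : analytic_at f x0 -> analytic_at (fun x => - f x) x0.
Proof.
  intros Hf; apply (analytic_at_ext (fun x => -1 * f x)); [intro; ring|].
  apply analytic_at_mult; auto using analytic_at_const.
Qed.

Lemma analytic_at_minus (f g : R -> R) (x0 : R) :
  analytic_at f x0 -> analytic_at g x0 -> analytic_at (fun x => f x - g x) x0.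
Proof. intros; apply analytic_at_plus; auto using analytic_at_opp. Qed.

Lemma analytic_at_rsum (f : nat -> R -> R) (N : nat) (x0 : R) :
  (forall m, analytic_at (f m) x0) -> analytic_at (fun x => rsum (fun m => f m x) N) x0.
Proof.
  intros H; induction N as [|N IH]; simpl; [apply analytic_at_const | apply analytic_at_plus; auto].
Qed.

Lemma analytic_at_rprod (f : nat -> R -> R) (N : nat) (x0 : R) :
  (forall m, (m < N)%nat -> analytic_at (f m) x0) -> analytic_at (fun x => rprod (fun m => f m x) N) x0.
Proof.
  induction N as [|N IH]; intros H; simpl; [apply analytic_at_const|].
  apply analytic_at_mult; auto.
Qed.

Lemma analytic_at_pow (i : nat) (x0 : R) : analytic_at (fun x => x ^ i) x0.
Proof.
  induction i as [|i IH]; simpl; [apply analytic_at_const|].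
  apply analytic_at_mult; auto using analytic_at_id.
Qed.

Fixpoint PS_pow (b : nat -> R) (m : nat) : nat -> R :=
  match m with O => affine_coef 1 0 | S m' => PS_mult b (PS_pow b m') end.

Lemma PS_pow_lt (b : nat -> R) (m j : nat) : b O = 0 -> (j < m)%nat -> PS_pow b m j = 0.
Proof.
  intros Hb0; revert j; induction m as [|m IH]; intros j Hj; [lia|]; simpl; unfold PS_mult.
  transitivity (sum_f_R0 (fun _ => 0) j); [|rewrite sum_cte; ring].
  apply sum_eq; intros [|i] Hi; [rewrite Hb0 | rewrite IH by lia]; ring.
Qed.

Lemma PS_pow_ge0 (b : nat -> R) (m j : nat) : (forall k, 0 <= b k) -> 0 <= PS_pow b m j.
Proof.
  intros Hb; revert j; induction m as [|m IH]; intros j; simpl.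
  - destruct j as [|[|j]]; simpl; lra.
  - apply cond_pos_sum; intro; apply Rmult_le_pos; auto.
Qed.

Lemma PS_pow_abs (b : nat -> R) (m j : nat) :
  Rabs (PS_pow b m j) <= PS_pow (fun k => Rabs (b k)) m j.
Proof.
  revert j; induction m as [|m IH]; intros j; simpl.
  - destruct j as [|[|j]]; simpl; rewrite ?Rabs_R1, ?Rabs_R0; lra.
  - unfold PS_mult; eapply Rle_trans; [apply sum_f_R0_triangle|].
    apply sum_Rle; intros i _; rewrite Rabs_mult; apply Rmult_le_compat_l; auto using Rabs_pos.
Qed.

Lemma is_series_PS_pow (b : nat -> R) (y v : R) (m : nat) :
  ex_series (fun n => Rabs (b n * y ^ n)) -> is_series (fun n => b n * y ^ n) v ->
  is_series (fun n => PS_pow b m n * y ^ n) (v ^ m) /\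
  ex_series (fun n => Rabs (PS_pow b m n * y ^ n)).
Proof.
  intros Eb Hb; induction m as [|m [IH1 IH2]]; simpl.
  - split.
    + pose proof (is_series_affine_coef 1 0 y) as H1; rewrite Rmult_0_l, Rplus_0_r in H1; exact H1.
    + apply (ex_series_abs_term _ (Rabs y)); [apply ex_series_affine_coef | lra].
  - split; [apply is_series_PS_mult | apply ex_series_abs_PS_mult]; auto.
Qed.

Lemma pow_le_half_pow (y r : R) (N j : nat) :
  Rabs y <= r / 2 -> (N < j)%nat -> Rabs y ^ j <= (/ 2) ^ (S N) * r ^ j.
Proof.
  intros Hy Hj; assert (Hr : 0 <= r) by (pose proof (Rabs_pos y); lra).
  apply Rle_trans with ((r * / 2) ^ j); [apply pow_incr; split; [apply Rabs_pos | lra]|].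
  rewrite Rpow_mult_distr, Rmult_comm; apply Rmult_le_compat_r; [apply pow_le; lra|].
  replace j with (S N + (j - S N))%nat by lia; rewrite pow_add.
  assert ((/ 2) ^ (j - S N) <= 1) by (rewrite <- (pow1 (j - S N)); apply pow_incr; lra).
  assert (0 <= (/ 2) ^ S N) by (apply pow_le; lra); nra.
Qed.

Lemma is_series_rsum (u : nat -> nat -> R) (U : nat -> R) (N : nat) :
  (forall m, is_series (u m) (U m)) -> is_series (fun j => rsum (fun m => u m j) N) (rsum U N).
Proof.
  intros H; induction N as [|N IH]; simpl; [apply is_series_R0|].
  apply (is_series_plus _ _ _ _ IH (H N)).
Qed.

Section Composition.
Variables (F : R -> R) (a : nat -> R) (R0 K : R).
Hypotheses (HR0 : 0 < R0) (HK : is_series (fun m => Rabs (a m) * R0 ^ m) K)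
  (HF : forall z, Rabs z <= R0 -> is_series (fun m => a m * z ^ m) (F z)).
Variables (h : R -> R) (x0 : R) (b : nat -> R) (rb : R).
Hypotheses (Hrb : 0 < rb) (Hb : pseries_on h x0 b rb) (Hh0 : h x0 = 0).

Lemma comp_inner_coef0 : b O = 0.
Proof.
  destruct Hb as [_ H]; rewrite <- Hh0, <- (Rplus_0_r x0); symmetry.
  apply is_series_pow0, H; rewrite Rabs_R0; lra.
Qed.

(* Since [b 0 = 0], shrinking the radius makes [sum |b n| r^n] as small as we like. *)
Lemma comp_small_radius :
  exists r rho, 0 < r <= rb /\ is_series (fun n => Rabs (b n) * r ^ n) rho /\ rho <= R0.
Proof.
  destruct Hb as [[Kb HKb] _].
  assert (HKb0 : 0 <= Kb).
  { apply (is_series_ge0 _ _ (fun n => abs_coef_pow_ge0 b rb n ltac:(lra)) HKb). }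
  set (q := Rmin 1 (R0 / (Kb + 1))).
  assert (Hq : 0 < q) by (apply Rmin_glb_lt; [lra | apply Rdiv_lt_0_compat; lra]).
  assert (Hq1 : q <= 1) by apply Rmin_l.
  assert (HqKb : q * Kb <= R0).
  { apply Rle_trans with (R0 / (Kb + 1) * (Kb + 1)); [|right; field; lra].
    assert (q <= R0 / (Kb + 1)) by apply Rmin_r; nra. }
  destruct (ex_series_abs_radius_le b rb (rb * q)) as [rho Hrho]; [eexists; exact HKb | nra|].
  exists (rb * q), rho; split; [nra | split; [exact Hrho|]].
  apply Rle_trans with (q * Kb); [|exact HqKb].
  refine (is_series_le _ _ _ _ Hrho (is_series_scal_l q _ _ HKb) _).
  intro n; change (scal q ?x) with (q * x); destruct n as [|n].
  { simpl; rewrite comp_inner_coef0, Rabs_R0; lra. }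
  rewrite Rpow_mult_distr; simpl (q ^ S n).
  assert (0 <= Rabs (b (S n)) * rb ^ S n) by (apply abs_coef_pow_ge0; lra).
  assert (0 <= q ^ n <= 1) by (split; [apply pow_le | rewrite <- (pow1 n); apply pow_incr]; lra).
  replace (Rabs (b (S n)) * (rb ^ S n * (q * q ^ n)))
    with (q * (Rabs (b (S n)) * rb ^ S n) * q ^ n) by ring.
  rewrite <- (Rmult_1_r (q * (Rabs (b (S n)) * rb ^ S n))) at 2.
  apply Rmult_le_compat_l; [apply Rmult_le_pos|]; lra.
Qed.

(* [F (h (x0 + y)) = sum_m a m (sum_j b j y^j)^m]; collecting powers of [y] in the first [N] terms
   gives [comp_partial N], and [comp_partial N j] no longer changes once [N > j]. *)
Definition comp_partial (N j : nat) : R := rsum (fun m => a m * PS_pow b m j) N.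

Definition comp_coef (j : nat) : R := comp_partial (S j) j.

Lemma comp_partial_stable (N j : nat) : (j <= N)%nat -> comp_partial (S N) j = comp_coef j.
Proof.
  intros Hj; unfold comp_coef; induction Hj as [|N Hj IH]; auto.
  unfold comp_partial in *; change (rsum ?f (S (S N))) with (rsum f (S N) + f (S N)); cbv beta.
  rewrite (PS_pow_lt b (S N) j comp_inner_coef0) by lia; rewrite IH; ring.
Qed.

Section ChosenRadius.
Variables (r rho : R).
Hypotheses (Hr : 0 < r <= rb) (Hrho : is_series (fun n => Rabs (b n) * r ^ n) rho)
  (Hrho_R0 : rho <= R0).

Lemma is_series_PS_pow_abs_b (m : nat) :
  is_series (fun j => PS_pow (fun k => Rabs (b k)) m j * r ^ j) (rho ^ m).
Proof.
  apply is_series_PS_pow; auto.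
  eapply ex_series_ext; [|eexists; exact Hrho].
  intro n; rewrite Rabs_pos_eq; auto; apply abs_coef_pow_ge0; lra.
Qed.

Lemma PS_pow_abs_b_term_le (m j : nat) : PS_pow (fun k => Rabs (b k)) m j * r ^ j <= rho ^ m.
Proof.
  apply (is_series_term_le (fun j => PS_pow (fun k => Rabs (b k)) m j * r ^ j));
    [|apply is_series_PS_pow_abs_b].
  intro n; apply Rmult_le_pos; [apply PS_pow_ge0; intro; apply Rabs_pos | apply pow_le; lra].
Qed.

Lemma rsum_abs_a_le (N : nat) : rsum (fun m => Rabs (a m) * rho ^ m) N <= K.
Proof.
  assert (Hrho0 : 0 <= rho)
    by apply (is_series_ge0 _ _ (fun n => abs_coef_pow_ge0 b r n ltac:(lra)) Hrho).
  assert (HR0_ge0 := fun n => abs_coef_pow_ge0 a R0 n ltac:(lra)).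
  apply Rle_trans with (rsum (fun m => Rabs (a m) * R0 ^ m) N).
  - apply rsum_le; intro m; apply Rmult_le_compat_l; [apply Rabs_pos | apply pow_incr; lra].
  - destruct N as [|N]; [simpl; apply (is_series_ge0 _ _ HR0_ge0 HK)|].
    rewrite rsum_S_sum_f_R0; apply (is_series_partial_le _ _ HR0_ge0 HK).
Qed.

Lemma comp_partial_abs_le (N j : nat) :
  Rabs (comp_partial N j) * r ^ j <=
  rsum (fun m => Rabs (a m) * (PS_pow (fun k => Rabs (b k)) m j * r ^ j)) N.
Proof.
  assert (0 <= r ^ j) by (apply pow_le; lra).
  eapply Rle_trans; [apply Rmult_le_compat_r; [auto | apply rsum_abs]|].
  rewrite Rmult_comm, <- rsum_scal; apply rsum_le; intro m.
  rewrite Rabs_mult, <- Rmult_assoc, (Rmult_comm (r ^ j)), Rmult_assoc.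
  apply Rmult_le_compat_l; [apply Rabs_pos|].
  rewrite Rmult_comm; apply Rmult_le_compat_r; [auto | apply PS_pow_abs].
Qed.

Lemma comp_coef_bound (j : nat) : Rabs (comp_coef j) * r ^ j <= K.
Proof.
  eapply Rle_trans; [apply comp_partial_abs_le|]; eapply Rle_trans; [|apply (rsum_abs_a_le (S j))].
  apply rsum_le; intro m; apply Rmult_le_compat_l; [apply Rabs_pos | apply PS_pow_abs_b_term_le].
Qed.

Lemma is_series_comp_partial (N : nat) (y : R) :
  Rabs y <= rb ->
  is_series (fun j => comp_partial N j * y ^ j) (rsum (fun m => a m * h (x0 + y) ^ m) N).
Proof.
  intros Hy; destruct Hb as [Eb Hby].
  assert (Hpow := fun m => is_series_PS_pow b y _ m (ex_series_abs_term b rb y Eb Hy) (Hby y Hy)).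
  apply (is_series_ext (fun j => rsum (fun m => a m * (PS_pow b m j * y ^ j)) N)).
  { intro j; unfold comp_partial; rewrite Rmult_comm, <- rsum_scal.
    apply rsum_ext_lt; intros; ring. }
  apply is_series_rsum; intro m; apply (is_series_scal_l (a m) _ _ (proj1 (Hpow m))).
Qed.

Lemma comp_tail_term_le (N j : nat) (y : R) :
  Rabs y <= r / 2 -> (N < j)%nat ->
  Rabs (comp_partial (S N) j * y ^ j) <=
  (/ 2) ^ S N * rsum (fun m => Rabs (a m) * (PS_pow (fun k => Rabs (b k)) m j * r ^ j)) (S N).
Proof.
  intros Hy Hj; rewrite Rabs_mult, <- RPow_abs.
  eapply Rle_trans;
    [apply Rmult_le_compat_l; [apply Rabs_pos | apply (pow_le_half_pow y r N j Hy Hj)]|].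
  replace (Rabs (comp_partial (S N) j) * ((/ 2) ^ S N * r ^ j))
    with ((/ 2) ^ S N * (Rabs (comp_partial (S N) j) * r ^ j)) by ring.
  apply Rmult_le_compat_l; [apply pow_le; lra | apply comp_partial_abs_le].
Qed.

Lemma comp_tail_bound (N : nat) (y : R) :
  Rabs y <= r / 2 ->
  Rabs (rsum (fun m => a m * h (x0 + y) ^ m) (S N) - sum_f_R0 (fun j => comp_coef j * y ^ j) N)
  <= (/ 2) ^ S N * K.
Proof.
  intros Hy.
  set (u := fun j => comp_partial (S N) j * y ^ j).
  set (v := fun j => u j - (if Compare_dec.le_dec j N then u j else 0)).
  set (w := fun j => (/ 2) ^ S N *
              rsum (fun m => Rabs (a m) * (PS_pow (fun k => Rabs (b k)) m j * r ^ j)) (S N)).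
  assert (Hv : is_series v (rsum (fun m => a m * h (x0 + y) ^ m) (S N) - sum_f_R0 u N)).
  { apply (is_series_minus _ _ _ _ (is_series_comp_partial (S N) y ltac:(lra)) (is_series_trunc u N)). }
  replace (sum_f_R0 (fun j => comp_coef j * y ^ j) N) with (sum_f_R0 u N)
    by (apply sum_eq; intros j Hj; unfold u; rewrite comp_partial_stable; auto).
  assert (Hw : is_series w ((/ 2) ^ S N * rsum (fun m => Rabs (a m) * rho ^ m) (S N))).
  { apply (is_series_scal_l (V := R_NormedModule) ((/ 2) ^ S N)), is_series_rsum; intro m.
    apply (is_series_scal_l (V := R_NormedModule) (Rabs (a m))), is_series_PS_pow_abs_b. }
  eapply Rle_trans; [apply (is_series_abs_le v w _ _ Hv Hw)|].
  - intro j; unfold v; destruct (Compare_dec.le_dec j N).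
    + rewrite Rminus_diag, Rabs_R0; apply Rmult_le_pos; [apply pow_le; lra|].
      apply rsum_ge0; intro m; apply Rmult_le_pos; [apply Rabs_pos|].
      apply Rmult_le_pos; [apply PS_pow_ge0; intro; apply Rabs_pos | apply pow_le; lra].
    + rewrite Rminus_0_r; apply comp_tail_term_le; [auto | lia].
  - apply Rmult_le_compat_l; [apply pow_le; lra | apply rsum_abs_a_le].
Qed.

Lemma comp_pseries : pseries_on (fun x => F (h x)) x0 comp_coef (r / 2).
Proof.
  split.
  - apply (ex_series_le_Rabs _ (fun j => K * (/ 2) ^ j)).
    + intro j; rewrite Rabs_pos_eq by (apply abs_coef_pow_ge0; lra).
      replace (r / 2) with (r * / 2) by lra; rewrite Rpow_mult_distr, <- Rmult_assoc.
      apply Rmult_le_compat_r; [apply pow_le; lra | apply comp_coef_bound].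
    + eexists; apply (is_series_scal_l (V := R_NormedModule) K), is_series_geom.
      rewrite Rabs_pos_eq; lra.
  - intros y Hy; destruct Hb as [_ Hby].
    assert (Hz : Rabs (h (x0 + y)) <= R0).
    { apply Rle_trans with rho; [|exact Hrho_R0].
      apply (is_series_abs_le _ _ _ _ (Hby y ltac:(lra)) Hrho).
      intro n; apply abs_term_le; lra. }
    assert (HFz := proj1 (is_series_Reals _ _) (HF _ Hz)).
    apply is_series_Reals, (Un_cv_close _ _ _ (/ 2 * K) HFz); intro N.
    rewrite <- rsum_S_sum_f_R0; replace ((/ 2) ^ N * (/ 2 * K)) with ((/ 2) ^ S N * K) by (simpl; ring).
    apply comp_tail_bound; lra.
Qed.

End ChosenRadius.
End Composition.

Lemma analytic_at_comp (F : R -> R) (a : nat -> R) (R0 : R) (h : R -> R) (x0 : R) :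
  0 < R0 -> ex_series (fun m => Rabs (a m) * R0 ^ m) ->
  (forall z, Rabs z <= R0 -> is_series (fun m => a m * z ^ m) (F z)) ->
  analytic_at h x0 -> h x0 = 0 -> analytic_at (fun x => F (h x)) x0.
Proof.
  intros HR0 [K HK] HF [b [rb [Hrb Hb]]] Hh0.
  destruct (comp_small_radius R0 HR0 h x0 b rb Hrb Hb Hh0) as [r [rho [Hr [Hrho HrhoR0]]]].
  exists (comp_coef a b), (r / 2); split; [lra|].
  apply (comp_pseries F a R0 K) with (rb := rb) (rho := rho); auto.
Qed.

Definition cos_coef (n : nat) : R := if Nat.even n then cos_n (Nat.div2 n) else 0.
Definition sin_coef (n : nat) : R := if Nat.even n then 0 else sin_n (Nat.div2 n).

Lemma is_series_cos_coef (z : R) : is_series (fun n => cos_coef n * z ^ n) (cos z).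
Proof.
  unfold cos; destruct (exist_cos (Rsqr z)) as [l Hl].
  apply is_pseries_R; replace l with (l + z * 0) by ring; apply is_pseries_odd_even;
    apply is_pseries_R; unfold cos_coef.
  - apply (is_series_ext (fun i => cos_n i * Rsqr z ^ i)); [|apply is_series_Reals, Hl].
    intro n; rewrite Nat.even_even, Nat.div2_double; unfold Rsqr; f_equal; f_equal; ring.
  - apply (is_series_ext (fun _ => 0)); [|apply is_series_R0].
    intro n; rewrite Nat.even_odd; symmetry; apply Rmult_0_l.
Qed.

Lemma is_series_sin_coef (z : R) : is_series (fun n => sin_coef n * z ^ n) (sin z).
Proof.
  unfold sin; destruct (exist_sin (Rsqr z)) as [l Hl].
  apply is_pseries_R; replace (z * l) with (0 + z * l) by ring; apply is_pseries_odd_even;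
    apply is_pseries_R; unfold sin_coef.
  - apply (is_series_ext (fun _ => 0)); [|apply is_series_R0].
    intro n; rewrite Nat.even_even; symmetry; apply Rmult_0_l.
  - apply (is_series_ext (fun i => sin_n i * Rsqr z ^ i)); [|apply is_series_Reals, Hl].
    intro n; rewrite Nat.even_odd, Nat.div2_odd'; unfold Rsqr; f_equal; f_equal; ring.
Qed.

Lemma ex_series_inv_fact_bounded (c : nat -> R) :
  (forall n, Rabs (c n) <= / INR (Factorial.fact n)) -> ex_series (fun n => Rabs (c n) * 1 ^ n).
Proof.
  intros Hc; apply (ex_series_le_Rabs _ (fun n => / INR (Factorial.fact n))).
  - intro n; rewrite pow1, Rmult_1_r, Rabs_Rabsolu; apply Hc.
  - eexists; apply (is_series_ext (fun n => / INR (Factorial.fact n) * 1 ^ n)).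
    + intro n; rewrite pow1; apply Rmult_1_r.
    + apply is_pseries_R, is_exp_Reals.
Qed.

Lemma cos_coef_abs_le (n : nat) : Rabs (cos_coef n) <= / INR (Factorial.fact n).
Proof.
  assert (0 < / INR (Factorial.fact n)) by apply Rinv_0_lt_compat, INR_fact_lt_0.
  unfold cos_coef; destruct (Nat.even n) eqn:E; [|rewrite Rabs_R0; lra].
  unfold cos_n; replace (2 * Nat.div2 n)%nat with n.
  - unfold Rdiv; rewrite Rabs_mult, pow_1_abs, Rabs_pos_eq; lra.
  - rewrite (Nat.div2_odd n) at 1; rewrite <- Nat.negb_even, E; simpl; lia.
Qed.

Lemma sin_coef_abs_le (n : nat) : Rabs (sin_coef n) <= / INR (Factorial.fact n).
Proof.
  assert (0 < / INR (Factorial.fact n)) by apply Rinv_0_lt_compat, INR_fact_lt_0.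
  unfold sin_coef; destruct (Nat.even n) eqn:E; [rewrite Rabs_R0; lra|].
  unfold sin_n; replace (2 * Nat.div2 n + 1)%nat with n.
  - unfold Rdiv; rewrite Rabs_mult, pow_1_abs, Rabs_pos_eq; lra.
  - rewrite (Nat.div2_odd n) at 1; rewrite <- Nat.negb_even, E; simpl; lia.
Qed.

Section AnalyticElementary.
Variables (g : R -> R) (x0 : R).
Hypothesis (Hg : analytic_at g x0).

(* Reduce to arguments vanishing at [x0] via the addition formulas. *)
Let Hshift : analytic_at (fun x => g x - g x0) x0.
Proof. apply analytic_at_minus; auto using analytic_at_const. Qed.

Let Hcos_shift : analytic_at (fun x => cos (g x - g x0)) x0.
Proof.
  apply (analytic_at_comp cos cos_coef 1 (fun x => g x - g x0)); auto; [lra | | | ring].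
  - apply ex_series_inv_fact_bounded, cos_coef_abs_le.
  - intros; apply is_series_cos_coef.
Qed.

Let Hsin_shift : analytic_at (fun x => sin (g x - g x0)) x0.
Proof.
  apply (analytic_at_comp sin sin_coef 1 (fun x => g x - g x0)); auto; [lra | | | ring].
  - apply ex_series_inv_fact_bounded, sin_coef_abs_le.
  - intros; apply is_series_sin_coef.
Qed.

Lemma analytic_at_cos : analytic_at (fun x => cos (g x)) x0.
Proof.
  apply (analytic_at_ext (fun x => cos (g x0) * cos (g x - g x0) - sin (g x0) * sin (g x - g x0))).
  { intro x; rewrite <- cos_plus; f_equal; ring. }
  apply analytic_at_minus; apply analytic_at_mult; auto using analytic_at_const.
Qed.

Lemma analytic_at_sin : analytic_at (fun x => sin (g x)) x0.
Proof.
  apply (analytic_at_ext (fun x => sin (g x0) * cos (g x - g x0) + cos (g x0) * sin (g x - g x0))).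
  { intro x; rewrite <- sin_plus; f_equal; ring. }
  apply analytic_at_plus; apply analytic_at_mult; auto using analytic_at_const.
Qed.

(* [1 / g = (1 / g x0) / (1 - u)] with [u = 1 - g / g x0] vanishing at [x0]: a geometric series. *)
Lemma analytic_at_inv : g x0 <> 0 -> analytic_at (fun x => / g x) x0.
Proof.
  intros Hg0; set (u := fun x => 1 - g x * / g x0).
  assert (Hu : analytic_at (fun x => / (1 - u x)) x0).
  { apply (analytic_at_comp (fun z => / (1 - z)) (fun _ => 1) (/ 2) u).
    - lra.
    - eexists; apply (is_series_ext (fun n => (/ 2) ^ n)).
      + intro n; rewrite Rabs_R1; symmetry; apply Rmult_1_l.
      + apply is_series_geom; rewrite Rabs_pos_eq; lra.
    - intros z Hz; apply (is_series_ext (fun n => z ^ n)).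
      + intro n; symmetry; apply Rmult_1_l.
      + apply is_series_geom; lra.
    - apply analytic_at_minus; [apply analytic_at_const|].
      apply analytic_at_mult; auto using analytic_at_const.
    - unfold u; field; auto. }
  apply (analytic_at_ext (fun x => / g x0 * / (1 - u x))).
  - intro x; unfold u; replace (1 - (1 - g x * / g x0)) with (g x * / g x0) by ring.
    rewrite Rinv_mult, Rinv_inv, (Rmult_comm (/ g x)), <- Rmult_assoc, Rinv_l; auto; ring.
  - apply analytic_at_mult; auto using analytic_at_const.
Qed.

End AnalyticElementary.

Lemma analytic_at_div (f g : R -> R) (x0 : R) :
  analytic_at f x0 -> analytic_at g x0 -> g x0 <> 0 -> analytic_at (fun x => f x / g x) x0.
Proof. intros; apply analytic_at_mult; auto; apply analytic_at_inv; auto. Qed.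

Lemma analytic_on_of_at (f : R -> R) (a b : R) :
  (forall x0, a < x0 < b -> analytic_at f x0) -> analytic_on f a b.
Proof.
  intros H x0 Hx0; destruct (H x0 Hx0) as [c [r [Hr [_ Hs]]]]; exists r; split; auto.
  exists c; intros x Hx; specialize (Hs (x - x0) ltac:(lra)).
  replace (x0 + (x - x0)) with x in Hs by ring; apply is_series_Reals, Hs.
Qed.

(** * Geometry of the polygon *)

Lemma oriented_angle_cos_sin (u v : pt) : dot u u = 1 -> dot v v = 1 ->
  cos (oriented_angle u v) = dot u v /\ sin (oriented_angle u v) = cross u v.
Proof.
  intros Hu Hv; destruct u as [u1 u2], v as [v1 v2]; unfold dot, cross in *; simpl in *.
  set (D := u1 * v1 + u2 * v2); set (X := u1 * v2 - u2 * v1).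
  assert (HDX : D * D + X * X = 1) by (unfold D, X; nra).
  assert (HD : -1 <= D <= 1) by (split; nra).
  assert (Hs : sqrt (1 - D²) = Rabs X) by (rewrite <- sqrt_Rsqr_abs; f_equal; unfold Rsqr; lra).
  unfold oriented_angle, dot, cross; simpl; fold D X.
  destruct (Rle_dec 0 X).
  - rewrite cos_acos, sin_acos, Hs, Rabs_pos_eq; auto.
  - rewrite cos_minus, sin_minus, cos_2PI, sin_2PI, cos_acos, sin_acos, Hs, Rabs_left by (auto; lra).
    split; ring.
Qed.

Section PolygonGeometry.
Variables (d : nat) (V : nat -> pt).
Hypothesis (Hpoly : simple_polygon d V).

Lemma sdir_norm2_pos (i : nat) :
  0 < fst (sdir d V i) * fst (sdir d V i) + snd (sdir d V i) * snd (sdir d V i).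
Proof.
  destruct Hpoly as [H3 [Hv _]].
  assert (Hne : vtx d V i <> vtx d V (S i)).
  { unfold vtx at 1 2 in Hv; specialize (Hv (i mod d) (Nat.mod_upper_bound i d ltac:(lia))).
    unfold vtx; rewrite Nat.Div0.mod_mod in Hv.
    replace (S i mod d)%nat with (S (i mod d) mod d)%nat; auto.
    replace (S (i mod d)) with (i mod d + 1)%nat by lia; replace (S i) with (i + 1)%nat by lia.
    apply Nat.Div0.add_mod_idemp_l. }
  unfold sdir, psub; destruct (vtx d V (S i)) as [a1 a2], (vtx d V i) as [b1 b2]; simpl.
  destruct (Req_dec a1 b1) as [->|]; [destruct (Req_dec a2 b2) as [->|]|].
  - exfalso; auto.
  - assert (0 < (a2 - b2) * (a2 - b2)) by (apply Rsqr_pos_lt; lra).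
    assert (0 <= (b1 - b1) * (b1 - b1)) by apply Rle_0_sqr; lra.
  - assert (0 < (a1 - b1) * (a1 - b1)) by (apply Rsqr_pos_lt; lra).
    assert (0 <= (a2 - b2) * (a2 - b2)) by apply Rle_0_sqr; lra.
Qed.

Lemma slen_pos (i : nat) : 0 < slen d V i.
Proof. apply sqrt_lt_R0, sdir_norm2_pos. Qed.

Lemma tang_unit (i : nat) : dot (tang d V i) (tang d V i) = 1.
Proof.
  assert (Hp := sdir_norm2_pos i); assert (Hl := slen_pos i).
  unfold tang, slen, pnorm, dot in *; destruct (sdir d V i) as [p1 p2]; simpl in *.
  set (L := sqrt (p1 * p1 + p2 * p2)) in *.
  assert (HL : L * L = p1 * p1 + p2 * p2) by (apply sqrt_sqrt; lra).
  replace (/ L * p1 * (/ L * p1) + / L * p2 * (/ L * p2)) with ((p1 * p1 + p2 * p2) / (L * L))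
    by (field; lra).
  rewrite HL; field; lra.
Qed.

Lemma inn_unit (i : nat) : dot (inn d V i) (inn d V i) = 1.
Proof.
  assert (U := tang_unit i); unfold inn, rotate, dot in *; rewrite cos_PI2, sin_PI2.
  destruct (tang d V i) as [a1 a2]; simpl in *; lra.
Qed.

Lemma beta_cos_sin (i j : nat) :
  cos (beta d V i j) = - dot (tang d V j) (tang d V i) /\
  sin (beta d V i j) = cross (tang d V j) (tang d V i).
Proof.
  unfold beta; destruct (oriented_angle_cos_sin (tang d V j) (tang d V i)) as [C S];
    try apply tang_unit.
  rewrite cos_minus, sin_minus, cos_PI, sin_PI, C, S; split; ring.
Qed.

Lemma cross_tang_dirv (i : nat) (th : R) : cross (tang d V i) (dirv d V i th) = cos th.
Proof.
  assert (U := tang_unit i); unfold dirv, inn, rotate, cross, dot in *; rewrite cos_PI2, sin_PI2.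
  destruct (tang d V i) as [a1 a2]; simpl in *.
  transitivity (cos th * (a1 * a1 + a2 * a2)); [ring | rewrite U; ring].
Qed.

Lemma cross_tang_dirv_other (i j : nat) (th : R) :
  cross (tang d V j) (dirv d V i th) = - cos (beta d V i j - th).
Proof.
  destruct (beta_cos_sin i j) as [C S]; rewrite cos_minus, C, S.
  unfold dirv, inn, rotate, cross, dot; rewrite cos_PI2, sin_PI2.
  destruct (tang d V i) as [a1 a2], (tang d V j) as [b1 b2]; simpl; ring.
Qed.

Lemma Phiij_s_affine (i j : nat) (s th : R) :
  Phiij_s d V i j s th = Phiij_s d V i j 0 th + s * (cos th / - cos (beta d V i j - th)).
Proof.
  unfold Phiij_s; rewrite !cross_tang_dirv_other, <- (cross_tang_dirv i th).
  unfold cross, psub, xline, padd, pscale.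
  destruct (tang d V i), (vtx d V i), (vtx d V j), (dirv d V i th); simpl; unfold Rdiv; ring.
Qed.

End PolygonGeometry.

(** * The angles [theta_k] *)

Lemma eq0_of_abs_le_near (S M delta : R) :
  0 < delta -> (forall e, 0 < e < delta -> Rabs S <= e * M) -> S = 0.
Proof.
  intros Hd H; destruct (Req_dec S 0) as [|HS]; auto; exfalso.
  assert (HSp : 0 < Rabs S) by (apply Rabs_pos_lt; auto).
  assert (HM : 0 <= M).
  { specialize (H (delta / 2) ltac:(lra)); apply Rmult_le_reg_l with (delta / 2); lra. }
  set (e := Rmin (delta / 2) (Rabs S / (2 * (M + 1)))).
  assert (He : 0 < e) by (apply Rmin_glb_lt; [lra | apply Rdiv_lt_0_compat; lra]).
  assert (He1 : e <= delta / 2) by apply Rmin_l.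
  assert (He2 : e * (2 * (M + 1)) <= Rabs S).
  { assert (Hmin := Rmin_r (delta / 2) (Rabs S / (2 * (M + 1)))); fold e in Hmin.
    apply (Rmult_le_compat_r (2 * (M + 1))) in Hmin; [|lra].
    unfold Rdiv in Hmin; rewrite Rmult_assoc, Rinv_l in Hmin; lra. }
  specialize (H e ltac:(lra)); nra.
Qed.

Definition geom_sum (lam : R) (m : nat) : R := rsum (fun i => lam ^ i) m.

Lemma pow_geom_sum (lam : R) (m : nat) : lam ^ m = 1 + (lam - 1) * geom_sum lam m.
Proof.
  induction m as [|m IH]; unfold geom_sum in *; simpl; [ring | rewrite IH at 1; rewrite IH; ring].
Qed.

Lemma geom_sum_ge1 (lam : R) (m : nat) : 0 < lam -> (0 < m)%nat -> 1 <= geom_sum lam m.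
Proof.
  intros Hl Hm; destruct m as [|m]; [lia|]; clear Hm; unfold geom_sum.
  induction m as [|m IH]; simpl in *; [lra|].
  assert (0 < lam * lam ^ m) by (apply Rmult_lt_0_compat; [|apply pow_lt]; lra); lra.
Qed.

Lemma geom_sum_1 (m : nat) : geom_sum 1 m = INR m.
Proof.
  induction m as [|m IH]; unfold geom_sum in *; simpl rsum; [simpl; ring|].
  rewrite IH, pow1, S_INR; ring.
Qed.

Lemma geom_sum_abs_le (lam : R) (m : nat) : 0 < lam < 2 -> Rabs (geom_sum lam m) <= geom_sum 2 m.
Proof.
  intros Hl; unfold geom_sum; eapply Rle_trans; [apply rsum_abs | apply rsum_le]; intro i.
  rewrite <- RPow_abs; apply pow_incr; rewrite Rabs_pos_eq; lra.
Qed.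

Lemma pow_neg1_sub (N k : nat) : (k <= 2 * N)%nat -> (-1) ^ (2 * N - k) = (-1) ^ k.
Proof.
  intros Hk; assert (Hsq : (-1) ^ k * (-1) ^ k = 1).
  { rewrite <- Rpow_mult_distr; replace (-1 * -1) with 1 by ring; apply pow1. }
  assert (H2N : (-1) ^ (2 * N) = 1)
    by (rewrite pow_mult; replace ((-1) ^ 2) with 1 by ring; apply pow1).
  transitivity ((-1) ^ (2 * N - k) * ((-1) ^ k * (-1) ^ k)); [rewrite Hsq; ring|].
  rewrite <- Rmult_assoc, <- pow_add, Nat.sub_add, H2N by lia; ring.
Qed.

(* [alt_poly (2 * n) betak lam] is the numerator of [theta0 lam]; writing
   [lam^j = 1 + (lam - 1) * geom_sum lam j] splits it as [P(1) + (lam - 1) Q(lam)]. *)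
Definition alt_poly (m : nat) (b : nat -> R) (lam : R) : R :=
  rsum (fun k => (- lam) ^ (m - k) * b k) m.
Definition alt_sum (m : nat) (b : nat -> R) : R :=
  rsum (fun k => (-1) ^ (m - k) * b k) m.
Definition alt_quot (m : nat) (b : nat -> R) (lam : R) : R :=
  rsum (fun k => (-1) ^ (m - k) * b k * geom_sum lam (m - k)) m.

Lemma alt_poly_split (m : nat) (b : nat -> R) (lam : R) :
  alt_poly m b lam = alt_sum m b + (lam - 1) * alt_quot m b lam.
Proof.
  unfold alt_poly, alt_sum, alt_quot; rewrite <- rsum_scal, <- rsum_plus; apply rsum_ext_lt; intros k _.
  replace (- lam) with (-1 * lam) by ring; rewrite Rpow_mult_distr, (pow_geom_sum lam (m - k)); ring.
Qed.

Section ThetaAlgebra.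
Variables (d : nat) (V : nat -> pt) (n : nat) (itin : nat -> nat).
Hypothesis (Hn : (0 < n)%nat).

Local Notation b := (betak d V n itin).
Local Notation theta0 := (theta0 d V n itin).
Local Notation thetak := (thetak d V n itin).

Lemma geom_sum_2n_ge1 (lam : R) : 0 < lam -> 1 <= geom_sum lam (2 * n).
Proof. intros; apply geom_sum_ge1; auto; lia. Qed.

Lemma thetak_unroll (lam : R) (m : nat) :
  thetak lam m = (- lam) ^ m * theta0 lam - rsum (fun k => (- lam) ^ (m - k) * b k) m.
Proof.
  induction m as [|m IH]; [simpl; ring|].
  change (thetak lam (S m)) with (lam * (b m - thetak lam m)); rewrite IH; cbn [rsum].
  rewrite (rsum_ext_lt (fun k => (- lam) ^ (S m - k) * b k)
             (fun k => - lam * ((- lam) ^ (m - k) * b k))), rsum_scal.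
  - replace (S m - m)%nat with 1%nat by lia; cbn [pow]; ring.
  - intros k Hk; replace (S m - k)%nat with (S (m - k)) by lia; cbn [pow]; ring.
Qed.

Lemma alt_sum_eq (lam : R) : 0 < lam -> lam <> 1 ->
  alt_sum (2 * n) b = (lam - 1) * (theta0 lam * geom_sum lam (2 * n) - alt_quot (2 * n) b lam).
Proof.
  intros Hl Hne; assert (HG := geom_sum_2n_ge1 lam Hl).
  assert (Hp : lam ^ (2 * n) - 1 = (lam - 1) * geom_sum lam (2 * n)) by (rewrite pow_geom_sum; ring).
  assert (Htheta : theta0 lam * (lam ^ (2 * n) - 1) = alt_poly (2 * n) b lam).
  { unfold Defs.theta0; destruct (Req_dec_T lam 1) as [|_]; [contradiction|].
    unfold alt_poly; rewrite Hp; field; split; [lra | intro; apply Hne; lra]. }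
  rewrite alt_poly_split, Hp in Htheta; lra.
Qed.

Lemma alt_sum_betak_eq0 (delta : R) : 0 < delta <= 1 ->
  (forall lam, 1 - delta < lam < 1 + delta -> - (PI / 2) < theta0 lam < PI / 2) ->
  alt_sum (2 * n) b = 0.
Proof.
  intros Hd Hb.
  set (MQ := rsum (fun k => Rabs (b k) * geom_sum 2 (2 * n - k)) (2 * n)).
  apply (eq0_of_abs_le_near _ (PI / 2 * geom_sum 2 (2 * n) + MQ) delta); [lra|].
  intros e He; specialize (Hb (1 + e) ltac:(lra)).
  rewrite (alt_sum_eq (1 + e)) by lra; replace (1 + e - 1) with e by ring.
  rewrite Rabs_mult, Rabs_pos_eq by lra; apply Rmult_le_compat_l; [lra|].
  unfold Rminus; eapply Rle_trans; [apply Rabs_triang|]; rewrite Rabs_Ropp.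
  apply Rplus_le_compat.
  - rewrite Rabs_mult; apply Rmult_le_compat; try apply Rabs_pos.
    + apply Rabs_le; lra.
    + apply geom_sum_abs_le; lra.
  - unfold alt_quot, MQ; eapply Rle_trans; [apply rsum_abs | apply rsum_le]; intro k.
    rewrite !Rabs_mult, pow_1_abs, Rmult_1_l.
    apply Rmult_le_compat_l; [apply Rabs_pos | apply geom_sum_abs_le; lra].
Qed.

Section VanishingAltSum.
Hypothesis (HS : alt_sum (2 * n) b = 0).

Lemma theta0_closed_form (lam : R) :
  0 < lam -> theta0 lam = alt_quot (2 * n) b lam / geom_sum lam (2 * n).
Proof.
  intros Hl; assert (HG := geom_sum_2n_ge1 lam Hl).
  destruct (Req_dec lam 1) as [->|Hne].
  - unfold Defs.theta0; destruct (Req_dec_T 1 1) as [_|]; [|contradiction].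
    unfold theta_hat0_formula; rewrite geom_sum_1.
    assert (INR (2 * n) <> 0) by (apply not_0_INR; lia).
    replace (alt_quot (2 * n) b 1) with (rsum (fun k => (-1) ^ S k * INR k * b k) (2 * n));
      [field; auto|].
    unfold alt_quot.
    rewrite (rsum_ext_lt (fun k => (-1) ^ (2 * n - k) * b k * geom_sum 1 (2 * n - k))
               (fun k => INR (2 * n) * ((-1) ^ (2 * n - k) * b k) + (-1) ^ S k * INR k * b k)).
    + rewrite rsum_plus, rsum_scal; fold (alt_sum (2 * n) b); rewrite HS; ring.
    + intros k Hk; rewrite geom_sum_1, minus_INR, pow_neg1_sub by lia; cbn [pow]; ring.
  - assert (E := alt_sum_eq lam Hl Hne); rewrite HS in E.
    symmetry in E; apply Rmult_integral in E; destruct E as [E|E]; [lra|].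
    apply (Rmult_eq_reg_r (geom_sum lam (2 * n))); [field_simplify|]; lra.
Qed.

Lemma thetak_period (lam : R) : 0 < lam -> thetak lam (2 * n) = theta0 lam.
Proof.
  intros Hl; assert (HG := geom_sum_2n_ge1 lam Hl).
  rewrite thetak_unroll; fold (alt_poly (2 * n) b lam); rewrite alt_poly_split, HS.
  replace ((- lam) ^ (2 * n)) with (1 + (lam - 1) * geom_sum lam (2 * n))
    by (rewrite <- pow_geom_sum, !pow_mult; f_equal; ring).
  rewrite theta0_closed_form by auto; field; lra.
Qed.

End VanishingAltSum.
End ThetaAlgebra.

Lemma rotate_eq_self (th : R) (w : pt) :
  dot w w = 1 -> rotate th w = w -> - (PI / 2) < th < PI / 2 -> th = 0.
Proof.
  intros U E Hth; destruct w as [w1 w2]; unfold rotate, dot in *; simpl in *; injection E as E1 E2.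
  assert (Hs : sin th = 0).
  { transitivity (w1 * (sin th * w1 + cos th * w2) - w2 * (cos th * w1 - sin th * w2)).
    - transitivity (sin th * (w1 * w1 + w2 * w2)); [rewrite U | ]; ring.
    - rewrite E1, E2; ring. }
  assert (HPI := PI_RGT_0).
  destruct (Rtotal_order th 0) as [H|[H|H]]; auto; exfalso.
  - assert (0 < sin (- th)) by (apply sin_gt_0; lra); rewrite sin_neg in *; lra.
  - assert (0 < sin th) by (apply sin_gt_0; lra); lra.
Qed.

(* Two free flights that retrace each other have the same length. *)
Lemma back_and_forth (B : pt -> Prop) (P w : pt) (t t' : R) :
  0 < t -> 0 < t' -> B P -> B (padd P (pscale (t - t') w)) ->
  (forall u, 0 < u < t -> ~ B (padd P (pscale u w))) ->
  (forall u, 0 < u < t' -> ~ B (padd P (pscale (t - u) w))) -> t' = t.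
Proof.
  intros Ht Ht' HP Hhit Hfree Hfree'.
  destruct (Rtotal_order t' t) as [Hlt|[|Hgt]]; auto; exfalso.
  - apply (Hfree (t - t')); auto; lra.
  - apply (Hfree' t); [lra|].
    replace (padd P (pscale (t - t) w)) with P; auto.
    destruct P, w; unfold padd, pscale; simpl; f_equal; ring.
Qed.

Lemma arc_le (d : nat) (V : nat -> pt) (i k : nat) : arc d V i <= arc d V (i + k).
Proof.
  induction k as [|k IH]; [rewrite Nat.add_0_r; lra|].
  replace (i + S k)%nat with (S (i + k)) by lia; simpl.
  assert (0 <= slen d V (i + k)) by apply sqrt_pos; lra.
Qed.

Lemma side_unique (d : nat) (V : nat -> pt) (s : R) (i j : nat) :
  on_side_int d V s i -> on_side_int d V s j -> i = j.
Proof.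
  intros [Hi [Hi1 Hi2]] [Hj [Hj1 Hj2]].
  destruct (Nat.lt_trichotomy i j) as [H|[H|H]]; auto; exfalso.
  - assert (E := arc_le d V (S i) (j - S i)); replace (S i + (j - S i))%nat with j in E by lia; lra.
  - assert (E := arc_le d V (S j) (i - S j)); replace (S j + (i - S j))%nat with i in E by lia; lra.
Qed.

Section Collisions.
Variables (d : nat) (V : nat -> pt).
Hypothesis (Hpoly : simple_polygon d V).

Lemma xline_seg_pt (s : R) (i : nat) : on_side_int d V s i ->
  xline d V i s = seg_pt d V i ((s - arc d V i) / slen d V i) /\ 0 < (s - arc d V i) / slen d V i < 1.
Proof.
  intros [Hi [H1 H2]]; assert (Hl := slen_pos d V Hpoly i); simpl in H2; split.
  - unfold xline, seg_pt, tang, padd, pscale; destruct (vtx d V i), (sdir d V i); simpl.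
    f_equal; field; lra.
  - split; [apply Rdiv_lt_0_compat; lra|].
    apply Rmult_lt_reg_r with (slen d V i); auto; unfold Rdiv; rewrite Rmult_assoc, Rinv_l; lra.
Qed.

Lemma xline_on_boundary (s : R) (i : nat) : on_side_int d V s i -> on_boundary d V (xline d V i s).
Proof.
  intros H; destruct (xline_seg_pt s i H) as [E B]; exists i, ((s - arc d V i) / slen d V i).
  destruct H as [Hi _]; split; [exact Hi | split; [lra | exact E]].
Qed.

(* Interior points of sides are not shared: this is where simplicity of the polygon is used. *)
Lemma xline_interior_inj (s s' : R) (i j : nat) :
  on_side_int d V s i -> on_side_int d V s' j -> xline d V j s' = xline d V i s -> j = i /\ s' = s.
Proof.
  intros Hs Hs' E.
  assert (Hji : j = i).
  { destruct (Nat.eq_dec j i) as [|Hne]; auto; exfalso.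
    destruct (xline_seg_pt s' j Hs') as [E' B'], (xline_seg_pt s i Hs) as [E0 B0].
    destruct Hpoly as [_ [_ [_ [Hsimp _]]]], Hs' as [Hjd _], Hs as [Hid _].
    rewrite E', E0 in E.
    destruct (Hsimp j i _ _ Hjd Hid Hne (conj (Rlt_le _ _ (proj1 B')) (Rlt_le _ _ (proj2 B')))
                (conj (Rlt_le _ _ (proj1 B0)) (Rlt_le _ _ (proj2 B0))) E)
      as [[_ [A _]]|[_ [A _]]]; lra. }
  subst j; split; auto.
  assert (U := tang_unit d V Hpoly i).
  unfold xline, padd, pscale in E; unfold dot in U; destruct (vtx d V i), (tang d V i) as [a1 a2].
  simpl in *; injection E as E1 E2.
  assert (Q1 : (s' - s) * a1 = 0) by lra; assert (Q2 : (s' - s) * a2 = 0) by lra.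
  assert (Hz : (s' - s) * (a1 * a1 + a2 * a2) = 0).
  { replace ((s' - s) * (a1 * a1 + a2 * a2)) with ((s' - s) * a1 * a1 + (s' - s) * a2 * a2) by ring.
    rewrite Q1, Q2; ring. }
  rewrite U in Hz; lra.
Qed.

Lemma dirv_0 (i : nat) : dirv d V i 0 = inn d V i.
Proof. unfold dirv, rotate; rewrite cos_0, sin_0; destruct (inn d V i); simpl; f_equal; ring. Qed.

Lemma inn_opp_of_beta0 (i j : nat) : beta d V i j = 0 -> inn d V j = pscale (-1) (inn d V i).
Proof.
  intros Hb; destruct (beta_cos_sin d V Hpoly i j) as [Cb _]; rewrite Hb, cos_0 in Cb.
  assert (Ua := tang_unit d V Hpoly i); assert (Ub := tang_unit d V Hpoly j).
  assert (Htg : tang d V j = pscale (-1) (tang d V i)).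
  { unfold dot, pscale in *; destruct (tang d V i) as [a1 a2], (tang d V j) as [b1 b2]; simpl in *.
    assert (X1 : (a1 + b1) * (a1 + b1) = 0) by nra; assert (X2 : (a2 + b2) * (a2 + b2) = 0) by nra.
    apply Rmult_integral in X1, X2; f_equal; destruct X1, X2; lra. }
  unfold inn, rotate; rewrite Htg; unfold pscale; destruct (tang d V i); simpl; f_equal; ring.
Qed.

Lemma reflect_antinormal_angle0 (j : nat) (u : pt) (th : R) :
  dot u u = 1 -> inn d V j = pscale (-1) u -> - (PI / 2) < th < PI / 2 ->
  dirv d V j th = reflect d V j u -> th = 0.
Proof.
  intros U Hj Hth Hrefl; apply (rotate_eq_self th (inn d V j)); auto using inn_unit.
  change (rotate th (inn d V j)) with (dirv d V j th); rewrite Hrefl; unfold reflect; rewrite Hj.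
  unfold dot, pscale, psub in *; destruct u as [u1 u2]; simpl in *.
  assert (H1 : u1 * (u1 * u1 + u2 * u2) = u1) by (rewrite U; ring).
  assert (H2 : u2 * (u1 * u1 + u2 * u2) = u2) by (rewrite U; ring).
  f_equal; lra.
Qed.

Lemma pscale_opp_opp (p : pt) : pscale (-1) (pscale (-1) p) = p.
Proof. destruct p; unfold pscale; simpl; f_equal; ring. Qed.

Lemma dot_opp_opp (p : pt) : dot (pscale (-1) p) (pscale (-1) p) = dot p p.
Proof. destruct p; unfold dot, pscale; simpl; ring. Qed.

Lemma Phi_perpendicular_bounce (i0 i1 : nat) (s0 s1 s2 t1 t2 : R) :
  beta d V i0 i1 = 0 -> on_side_int d V s0 i0 -> on_side_int d V s1 i1 ->
  Phi d V (s0, 0) (s1, t1) -> Phi d V (s1, t1) (s2, t2) -> s2 = s0 /\ t2 = 0.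
Proof.
  intros Hb Hs0 Hs1 H01 H12.
  destruct H01 as [i [j [Hsi [Hsj [_ [Ht1 [t [Ht [Hhit [Hfree Hrefl]]]]]]]]]].
  rewrite (side_unique d V s0 i i0), (side_unique d V s1 j i1), dirv_0 in * by auto.
  set (w := inn d V i0) in *; assert (Uw : dot w w = 1) by apply inn_unit, Hpoly.
  assert (Hw1 : inn d V i1 = pscale (-1) w) by (apply inn_opp_of_beta0, Hb).
  assert (t1 = 0) as -> by apply (reflect_antinormal_angle0 i1 w t1 Uw Hw1 Ht1 Hrefl).
  destruct H12 as [i' [j' [Hsi' [Hsj' [_ [Ht2 [t' [Ht' [Hhit' [Hfree' Hrefl']]]]]]]]]].
  rewrite (side_unique d V s1 i' i1), dirv_0, Hw1 in * by auto.
  set (P0 := xline d V i0 s0).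
  assert (Hback : forall u,
            padd (xline d V i1 s1) (pscale u (pscale (-1) w)) = padd P0 (pscale (t - u) w)).
  { intro u; rewrite <- Hhit; unfold P0, padd, pscale; destruct w, (xline d V i0 s0); simpl.
    f_equal; ring. }
  assert (t' = t) as ->.
  { apply (back_and_forth (on_boundary d V) P0 w t t' Ht Ht'); auto.
    - apply xline_on_boundary, Hs0.
    - rewrite <- Hback, Hhit'; apply xline_on_boundary, Hsj'.
    - intros u Hu; rewrite <- Hback; apply Hfree', Hu. }
  assert (Hret : xline d V j' s2 = xline d V i0 s0).
  { rewrite <- Hhit', Hback, Rminus_diag; unfold P0, padd, pscale; destruct w, (xline d V i0 s0).
    simpl; f_equal; ring. }
  destruct (xline_interior_inj s0 s2 i0 j' Hs0 Hsj' Hret) as [-> ->]; split; auto.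
  apply (reflect_antinormal_angle0 i0 (pscale (-1) w) t2); auto.
  - rewrite dot_opp_opp; exact Uw.
  - rewrite pscale_opp_opp; reflexivity.
Qed.

End Collisions.

(* With all [beta_k = 0] the orbit would bounce perpendicularly between two antiparallel sides and
   return after two collisions, contradicting minimality of the period [2n > 2]. *)
Lemma cylinder_not_flat (d : nat) (V : nat -> pt) (n : nat) (itin : nat -> nat) (thh : nat -> R)
  (C : pt -> Prop) :
  simple_polygon d V -> (1 < n)%nat -> periodic_cylinder d V n itin thh C ->
  thh O = theta_hat0_formula d V n itin -> ~ (forall k, (k < 2 * n)%nat -> betak d V n itin k = 0).
Proof.
  intros Hpoly Hn [[p Cp] HC] Hth0 Hb.
  assert (Hformula : theta_hat0_formula d V n itin = 0).
  { unfold theta_hat0_formula; rewrite rsum_eq0; [ring|]; intros m Hm; rewrite Hb by auto; ring. }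
  apply HC in Cp; destruct Cp as [q [Hq0 [_ [Hphi [Hne Hside]]]]].
  assert (Hb0 : beta d V (itin O) (itin 1%nat) = 0).
  { rewrite <- (Hb O) by lia; unfold betak, it; rewrite Nat.Div0.mod_0_l, Nat.mod_small by lia; auto. }
  apply (Hne 2%nat ltac:(lia)); rewrite <- Hq0.
  destruct (Hside O ltac:(lia)) as [Hs0 Ht0], (Hside 1%nat ltac:(lia)) as [Hs1 _].
  assert (Hphi0 := Hphi O ltac:(lia)); assert (Hphi1 := Hphi 1%nat ltac:(lia)).
  destruct (q O) as [s0 t0], (q 1%nat) as [s1 t1], (q 2%nat) as [s2 t2]; simpl in *.
  rewrite Hth0, Hformula in Ht0; subst t0.
  destruct (Phi_perpendicular_bounce d V Hpoly (itin O) (itin 1%nat) s0 s1 s2 t1 t2) as [-> ->]; auto.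
Qed.

(** * The slope of [F_2n] *)

Lemma cos_abs (x : R) : cos (Rabs x) = cos x.
Proof. unfold Rabs; destruct (Rcase_abs x); [apply cos_neg | reflexivity]. Qed.

Lemma cos_le_cos_abs (x y : R) : Rabs x <= Rabs y -> Rabs y < PI / 2 -> cos y <= cos x.
Proof.
  intros Hxy Hy; rewrite <- (cos_abs x), <- (cos_abs y).
  destruct (Req_dec (Rabs x) (Rabs y)) as [->|Hne]; [lra|].
  left; apply cos_decreasing_1; try apply Rabs_pos; pose proof PI_RGT_0; lra.
Qed.

Lemma cos_lt_cos_abs (x y : R) : Rabs x < Rabs y -> Rabs y < PI / 2 -> cos y < cos x.
Proof.
  intros Hxy Hy; rewrite <- (cos_abs x), <- (cos_abs y).
  apply cos_decreasing_1; try apply Rabs_pos; pose proof PI_RGT_0; lra.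
Qed.

Lemma rprod_cos_scale_lt (u : nat -> R) (lam : R) (m : nat) :
  0 < lam < 1 -> (forall i, (i < m)%nat -> Rabs (u i) < PI / 2) ->
  (exists i, (i < m)%nat /\ u i <> 0) ->
  rprod (fun i => cos (u i)) m < rprod (fun i => cos (lam * u i)) m.
Proof.
  intros Hl Hu [i0 [Hi0 Hu0]].
  assert (Habs : forall i, Rabs (lam * u i) = lam * Rabs (u i))
    by (intro; rewrite Rabs_mult, Rabs_pos_eq; lra).
  apply (rprod_lt _ _ m i0); auto.
  - intros i Hi; specialize (Hu i Hi); split; [apply cos_gt_0; apply Rabs_def2 in Hu; lra|].
    apply cos_le_cos_abs; auto; rewrite Habs; pose proof (Rabs_pos (u i)); nra.
  - apply cos_lt_cos_abs; auto; rewrite Habs; pose proof (Rabs_pos_lt _ Hu0); nra.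
Qed.

Lemma rprod_cos_scale_gt (u : nat -> R) (lam : R) (m : nat) :
  1 < lam -> (forall i, (i < m)%nat -> Rabs (lam * u i) < PI / 2) ->
  (exists i, (i < m)%nat /\ u i <> 0) ->
  rprod (fun i => cos (lam * u i)) m < rprod (fun i => cos (u i)) m.
Proof.
  intros Hl Hu [i0 [Hi0 Hu0]].
  assert (Habs : forall i, Rabs (lam * u i) = lam * Rabs (u i))
    by (intro; rewrite Rabs_mult, Rabs_pos_eq; lra).
  apply (rprod_lt _ _ m i0); auto.
  - intros i Hi; specialize (Hu i Hi); split; [apply cos_gt_0; apply Rabs_def2 in Hu; lra|].
    apply cos_le_cos_abs; auto; rewrite Habs; pose proof (Rabs_pos (u i)); nra.
  - apply cos_lt_cos_abs; auto; rewrite Habs; pose proof (Rabs_pos_lt _ Hu0); nra.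
Qed.

Section Cylinder.
Variables (d : nat) (V : nat -> pt) (n : nat) (itin : nat -> nat).

Local Notation b := (betak d V n itin).
Local Notation thetak := (thetak d V n itin).

Lemma Fstate_snd (k : nat) (s lam : R) : snd (Fstate d V n itin k s lam) = thetak lam k.
Proof. induction k as [|k IH]; simpl; auto; rewrite IH; auto. Qed.

Lemma F_succ (k : nat) (s lam : R) :
  F d V n itin (S k) s lam =
  Phiij_s d V (it n itin k) (it n itin (S k)) (F d V n itin k s lam) (thetak lam k).
Proof. unfold F; simpl; rewrite Fstate_snd; auto. Qed.

Definition slope (k : nat) (lam : R) : R :=
  rprod (fun i => cos (thetak lam i) / - cos (b i - thetak lam i)) k.

Lemma F_affine (k : nat) (s lam : R) : simple_polygon d V ->
  F d V n itin k s lam = F d V n itin k 0 lam + s * slope k lam.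
Proof.
  intros Hpoly; induction k as [|k IH]; [unfold F, slope; simpl; ring|].
  rewrite !F_succ, (Phiij_s_affine d V Hpoly _ _ (F d V n itin k s lam)),
    (Phiij_s_affine d V Hpoly _ _ (F d V n itin k 0 lam)), IH.
  unfold slope; cbn [rprod]; unfold betak; ring.
Qed.

Section Period.
Variable (lam : R).
Hypotheses (Hn : (0 < n)%nat) (Hl : 0 < lam) (HS : alt_sum (2 * n) b = 0)
  (Hth : forall k, (k <= 2 * n)%nat -> - (PI / 2) < thetak lam k < PI / 2)
  (Hdom : forall k, (k < 2 * n)%nat -> - (PI / 2) < b k - thetak lam k < PI / 2).

Local Notation u i := (b i - thetak lam i).

Lemma cos_deviation_pos (i : nat) : (i < 2 * n)%nat -> 0 < cos (u i).
Proof. intros Hi; destruct (Hdom i Hi); apply cos_gt_0; lra. Qed.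

(* Using [theta_(i+1) = lam * u_i] and [theta_(2n) = theta_0], the numerators telescope against a
   shifted product. *)
Lemma slope_period :
  slope (2 * n) lam = rprod (fun i => cos (lam * u i)) (2 * n) / rprod (fun i => cos (u i)) (2 * n).
Proof.
  assert (Hcu := cos_deviation_pos).
  unfold slope; rewrite rprod_opp_den, pow_mult, rprod_div by auto.
  replace ((-1) ^ 2) with 1 by ring; rewrite pow1, Rmult_1_l; f_equal.
  set (f := fun i => cos (thetak lam i)).
  assert (Hshift := rprod_shift f (2 * n)).
  assert (Hf : f (2 * n)%nat = f O) by (unfold f; rewrite thetak_period; auto).
  assert (Hf0 : 0 < f O) by (apply cos_gt_0; apply (Hth O); lia).
  rewrite Hf in Hshift; apply (Rmult_eq_reg_r (f O)); [|lra].
  rewrite <- Hshift; f_equal; apply rprod_ext_lt; intros i _; reflexivity.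
Qed.

Lemma slope_pos : 0 < slope (2 * n) lam.
Proof.
  rewrite slope_period; apply Rdiv_lt_0_compat; apply rprod_gt0; [|apply cos_deviation_pos].
  intros i Hi; change (lam * u i) with (thetak lam (S i)).
  destruct (Hth (S i) ltac:(lia)); apply cos_gt_0; lra.
Qed.

Lemma slope_cases : (exists i, (i < 2 * n)%nat /\ u i <> 0) ->
  (lam < 1 -> 1 < slope (2 * n) lam) /\ (lam = 1 -> slope (2 * n) lam = 1) /\
  (1 < lam -> slope (2 * n) lam < 1).
Proof.
  intros Hdev; rewrite slope_period.
  assert (Hu : forall i, (i < 2 * n)%nat -> Rabs (u i) < PI / 2)
    by (intros i Hi; destruct (Hdom i Hi); apply Rabs_def1; lra).
  assert (Hlu : forall i, (i < 2 * n)%nat -> Rabs (lam * u i) < PI / 2).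
  { intros i Hi; change (lam * u i) with (thetak lam (S i)); destruct (Hth (S i) ltac:(lia)).
    apply Rabs_def1; lra. }
  assert (Hden := rprod_gt0 (fun i => cos (u i)) (2 * n) cos_deviation_pos).
  split; [|split]; intro Hlam.
  - assert (Hlt := rprod_cos_scale_lt (fun i => u i) lam (2 * n) ltac:(lra) Hu Hdev).
    apply (Rmult_lt_reg_r (rprod (fun i => cos (u i)) (2 * n))); auto.
    unfold Rdiv; rewrite Rmult_assoc, Rinv_l; lra.
  - rewrite (rprod_ext_lt (fun i => cos (lam * u i)) (fun i => cos (u i))); [field; lra|].
    intros i _; rewrite Hlam at 1; rewrite Rmult_1_l; reflexivity.
  - assert (Hgt := rprod_cos_scale_gt (fun i => u i) lam (2 * n) Hlam Hlu Hdev).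
    apply (Rmult_lt_reg_r (rprod (fun i => cos (u i)) (2 * n))); auto.
    unfold Rdiv; rewrite Rmult_assoc, Rinv_l; lra.
Qed.

End Period.
End Cylinder.

(** * Analytic dependence on [lambda] *)

Ltac analytic_auto :=
  repeat match goal with
  | |- analytic_at (fun _ => ?k) _ => apply analytic_at_const
  | |- analytic_at (fun x => x) _ => apply analytic_at_id
  | |- analytic_at (fun _ => _ + _) _ => apply analytic_at_plus
  | |- analytic_at (fun _ => _ - _) _ => apply analytic_at_minus
  | |- analytic_at (fun _ => _ * _) _ => apply analytic_at_mult
  | |- analytic_at (fun _ => - _) _ => apply analytic_at_opp
  | |- analytic_at (fun _ => _ / _) _ => apply analytic_at_div
  | |- analytic_at (fun _ => cos _) _ => apply analytic_at_cos
  | |- analytic_at (fun _ => sin _) _ => apply analytic_at_sin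
  | |- analytic_at _ _ => assumption
  end.

Lemma analytic_at_geom_sum (m : nat) (x0 : R) : analytic_at (fun x => geom_sum x m) x0.
Proof. apply (analytic_at_rsum (fun i x => x ^ i)); intro; apply analytic_at_pow. Qed.

Lemma analytic_at_Phiij_s (d : nat) (V : nat -> pt) (i j : nat) (g th : R -> R) (x0 : R) :
  simple_polygon d V -> analytic_at g x0 -> analytic_at th x0 ->
  - (PI / 2) < beta d V i j - th x0 < PI / 2 ->
  analytic_at (fun x => Phiij_s d V i j (g x) (th x)) x0.
Proof.
  intros Hpoly Hg Hth Hdom.
  assert (0 < cos (beta d V i j - th x0)) by (apply cos_gt_0; lra).
  apply (analytic_at_ext (fun x => arc d V j + cross (psub (xline d V i (g x)) (vtx d V j))
           (dirv d V i (th x)) / - cos (beta d V i j - th x))).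
  { intro x; unfold Phiij_s; rewrite cross_tang_dirv_other; auto. }
  unfold cross, psub, xline, padd, pscale, dirv, rotate; cbn [fst snd].
  analytic_auto; lra.
Qed.

Section CylinderAnalyticity.
Variables (d : nat) (V : nat -> pt) (n : nat) (itin : nat -> nat).
Hypotheses (Hn : (0 < n)%nat) (HS : alt_sum (2 * n) (betak d V n itin) = 0).

Lemma analytic_at_thetak (x0 : R) (k : nat) :
  0 < x0 -> analytic_at (fun lam => thetak d V n itin lam k) x0.
Proof.
  intros Hx0; induction k as [|k IH]; simpl.
  - assert (HG := geom_sum_2n_ge1 n Hn x0 Hx0).
    apply (analytic_at_ext_near
             (fun lam => alt_quot (2 * n) (betak d V n itin) lam / geom_sum lam (2 * n)) _ x0 x0);
      [lra | |].
    + intros x Hx; apply Rabs_def2 in Hx; symmetry; apply theta0_closed_form; auto; lra.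
    + apply analytic_at_div; [|apply analytic_at_geom_sum | lra].
      apply (analytic_at_rsum
               (fun k x => (-1) ^ (2 * n - k) * betak d V n itin k * geom_sum x (2 * n - k))).
      intro m; apply analytic_at_mult; [apply analytic_at_const | apply analytic_at_geom_sum].
  - analytic_auto.
Qed.

Section NearOne.
Variables (delta : R).
Hypotheses (Hpoly : simple_polygon d V) (Hdelta : 0 < delta <= 1)
  (Hdom : forall lam, 1 - delta < lam < 1 + delta -> forall k, (k < 2 * n)%nat ->
           - (PI / 2) < betak d V n itin k - thetak d V n itin lam k < PI / 2).

Lemma analytic_on_F (k : nat) (s : R) : (k <= 2 * n)%nat ->
  analytic_on (fun lam => F d V n itin k s lam) (1 - delta) (1 + delta).
Proof.
  intros Hk; apply analytic_on_of_at; intros x0 Hx0; induction k as [|k IH].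
  - apply (analytic_at_ext (fun _ => s)); [reflexivity | apply analytic_at_const].
  - apply (analytic_at_ext (fun lam => Phiij_s d V (it n itin k) (it n itin (S k))
             (F d V n itin k s lam) (thetak d V n itin lam k))); [intro; symmetry; apply F_succ|].
    apply analytic_at_Phiij_s; auto;
      [apply IH; lia | apply analytic_at_thetak; lra | apply (Hdom x0 Hx0 k); lia].
Qed.

Lemma analytic_on_slope : analytic_on (slope d V n itin (2 * n)) (1 - delta) (1 + delta).
Proof.
  apply analytic_on_of_at; intros x0 Hx0; unfold slope.
  apply (analytic_at_rprod (fun i lam => cos (thetak d V n itin lam i) /
           - cos (betak d V n itin i - thetak d V n itin lam i))); intros i Hi.
  assert (Hthi := analytic_at_thetak x0 i ltac:(lra)).
  destruct (Hdom x0 Hx0 i Hi).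
  assert (0 < cos (betak d V n itin i - thetak d V n itin x0 i)) by (apply cos_gt_0; lra).
  analytic_auto; lra.
Qed.

End NearOne.
End CylinderAnalyticity.

Lemma deviation_nonzero (d : nat) (V : nat -> pt) (n : nat) (itin : nat -> nat) (thh : nat -> R)
  (C : pt -> Prop) (lam : R) :
  simple_polygon d V -> (1 < n)%nat -> periodic_cylinder d V n itin thh C ->
  thh O = theta_hat0_formula d V n itin -> 0 < lam -> alt_sum (2 * n) (betak d V n itin) = 0 ->
  exists i, (i < 2 * n)%nat /\ betak d V n itin i - thetak d V n itin lam i <> 0.
Proof.
  intros Hpoly Hn HC Hth0 Hl HS.
  destruct (classic (exists i, (i < 2 * n)%nat /\ betak d V n itin i - thetak d V n itin lam i <> 0))
    as [|Hnone]; auto; exfalso.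
  assert (Hu : forall i, (i < 2 * n)%nat -> betak d V n itin i - thetak d V n itin lam i = 0).
  { intros i Hi; apply NNPP; intro; apply Hnone; eauto. }
  assert (Hth : forall k, (k < 2 * n)%nat -> thetak d V n itin lam k = 0).
  { intros [|k] Hk.
    - change (thetak d V n itin lam O) with (theta0 d V n itin lam).
      rewrite <- (thetak_period d V n itin ltac:(lia) HS lam Hl).
      replace (2 * n)%nat with (S (2 * n - 1)) by lia; simpl; rewrite Hu by lia; ring.
    - simpl; rewrite Hu by lia; ring. }
  apply (cylinder_not_flat d V n itin thh C Hpoly Hn HC Hth0); intros k Hk.
  specialize (Hu k Hk); rewrite Hth in Hu; auto; lra.
Qed.

Theorem lemma3p3
  (d : nat) (V : nat -> pt) (Hpoly : simple_polygon d V)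
  (n : nat) (Hn : (1 < n)%nat)
  (itin : nat -> nat) (thh : nat -> R) (C : pt -> Prop)
  (HC : periodic_cylinder d V n itin thh C)
  (Hth0 : thh O = theta_hat0_formula d V n itin)
  (delta : R) (Hdelta : 0 < delta <= 1)
  (Hth : forall lam, 1 - delta < lam < 1 + delta -> forall k, (k <= 2 * n)%nat ->
           - (PI / 2) < thetak d V n itin lam k < PI / 2)
  (Hdom : forall lam, 1 - delta < lam < 1 + delta -> forall k, (k < 2 * n)%nat ->
           - (PI / 2) < betak d V n itin k - thetak d V n itin lam k < PI / 2) :
  exists A B : R -> R,
    analytic_on A (1 - delta) (1 + delta) /\ analytic_on B (1 - delta) (1 + delta) /\
    forall lam, 1 - delta < lam < 1 + delta ->
      (forall s, F d V n itin (2 * n) s lam = A lam * s + B lam) /\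
      0 < A lam /\
      (1 < A lam <-> lam < 1) /\
      (A lam < 1 <-> 1 < lam).
Proof.
  assert (Hn0 : (0 < n)%nat) by lia.
  assert (HS : alt_sum (2 * n) (betak d V n itin) = 0).
  { apply (alt_sum_betak_eq0 d V n itin Hn0 delta Hdelta); intros lam Hl; apply (Hth lam Hl O); lia. }
  exists (slope d V n itin (2 * n)), (F d V n itin (2 * n) 0).
  split; [apply (analytic_on_slope d V n itin Hn0 HS delta); auto|].
  split; [apply (analytic_on_F d V n itin Hn0 HS delta); auto|].
  intros lam Hl; specialize (Hth lam Hl); specialize (Hdom lam Hl).
  split; [intro s; rewrite (F_affine d V n itin _ s lam Hpoly); ring|].
  split; [apply slope_pos; auto; lra|].
  destruct (slope_cases d V n itin lam Hn0 ltac:(lra) HS Hth Hdom) as [Hlt [Heq Hgt]];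
    [apply (deviation_nonzero d V n itin thh C lam); auto; lra|].
  destruct (Rtotal_order lam 1) as [H|[H|H]];
    [specialize (Hlt H) | specialize (Heq H) | specialize (Hgt H)]; split; split; intro; lra.
Qed.
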